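(* Let $n, a_1,\ldots,a_n$ be positive integers and let $M=M_{a_1,\ldots,a_n}=\prod_{k=1}^{n}\begin{pmatrix}0&1\\ 1&a_k\end{pmatrix}$ (product from left to right). Then $(a_1,a_2,\ldots,a_n)$ is one of the LLS periods of $M$.
   Context: Let $O=(0,0)$. For vectors $u,v\in\mathbb{R}^2$, $\det(u,v)$ is the determinant of the matrix with columns $u,v$; for points $X,Y$, $XY$ denotes the vector $Y-X$. An integer point is a point of $\mathbb{Z}^2$. All angles considered are convex angles with vertex $O$. The sail of such an angle is defined as follows: take the convex hull of all integer points in the closed angle other than $O$; the sail is the broken line formed by the boundary of this convex hull with the (possibly empty) rays lying on the edges of the angle removed (their endpoints kept). It is oriented from the first edge of the angle to the second. For a broken line $\ldots A_{k-1}A_kA_{k+1}\ldots$ (finite or infinite, vertices being the break points, with $O,A_k,A_{k+1}$ never collinear) its LLS sequence is given by $a_{2k}=\det(OA_k,OA_{k+1})$ for each edge $A_kA_{k+1}$ and $a_{2k-1}=\det(A_kA_{k-1},A_kA_{k+1})/(a_{2k-2}a_{2k})$ for each interior vertex $A_k$. The LLS sequence of an angle is the sequence of absolute values of the LLS sequence of its sail. Let $M\in\mathrm{GL}(2,\mathbb{Z})$ have two distinct real irrational eigenvalues. The complement of the union of its two eigenlines consists of four open cones; the sails of (the closures of) these cones are the sails associated to $M$ (they are bi-infinite broken lines). The LLS sequence of $M$ is the (bi-infinite) LLS sequence of an associated sail; it is known that all associated sails give the same sequence up to a shift of indices. $M^2$ maps each associated sail to itself, shifting its vertices by some number $n'\ge1$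 of positions; any block of $n'$ consecutive entries of the LLS sequence of $M$ is called an LLS period of $M$. *)

From Stdlib Require Import Reals ZArith List.
Open Scope R_scope.

Definition pt := (R * R)%type.
Definition O : pt := (0, 0).
Definition vsub (p q : pt) : pt := (fst p - fst q, snd p - snd q).
Definition vscale (c : R) (p : pt) : pt := (c * fst p, c * snd p).
Definition det (u v : pt) : R := fst u * snd v - snd u * fst v.
Definition dist (p q : pt) : R :=
  sqrt ((fst p - fst q) ^ 2 + (snd p - snd q) ^ 2).

Definition integer_point (p : pt) : Prop :=
  exists x y : Z, p = (IZR x, IZR y).

Record mat2 := Mat { m11 : Z; m12 : Z; m21 : Z; m22 : Z }.
Definition mmul (A B : mat2) : mat2 :=
  Mat (m11 A * m11 B + m12 A * m21 B)%Z (m11 A * m12 B + m12 A * m22 B)%Z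
      (m21 A * m11 B + m22 A * m21 B)%Z (m21 A * m12 B + m22 A * m22 B)%Z.
Definition mid : mat2 := Mat 1 0 0 1.
Definition elem (a : Z) : mat2 := Mat 0 1 1 a.
Definition Mprod (l : list Z) : mat2 := fold_left (fun M a => mmul M (elem a)) l mid.
Definition act (M : mat2) (p : pt) : pt :=
  (IZR (m11 M) * fst p + IZR (m12 M) * snd p,
   IZR (m21 M) * fst p + IZR (m22 M) * snd p).

Definition cone (u w : pt) (p : pt) : Prop :=
  exists s t, 0 <= s /\ 0 <= t /\ p = (s * fst u + t * fst w, s * snd u + t * snd w).
Definition ray (e : pt) (p : pt) : Prop := exists t, 0 <= t /\ p = vscale t e.

Definition conv (S : pt -> Prop) (p : pt) : Prop :=
  exists l : list (R * pt),
    Forall (fun c => 0 <= fst c /\ S (snd c)) l /\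
    fold_right (fun c acc => fst c + acc) 0 l = 1 /\
    p = fold_right (fun c acc => (fst c * fst (snd c) + fst acc,
                                  fst c * snd (snd c) + snd acc)) O l.

Definition boundary (K : pt -> Prop) (p : pt) : Prop :=
  forall eps, 0 < eps ->
    (exists q, K q /\ dist p q < eps) /\ (exists q, ~ K q /\ dist p q < eps).

Definition hull_cone (u w : pt) : pt -> Prop :=
  conv (fun p => cone u w p /\ integer_point p /\ p <> O).

(** The sail (as a set): boundary of the hull with the rays lying on the edges
    of the angle removed, their endpoints kept.  A boundary point p lying on an
    edge is removed iff a boundary point strictly closer to O lies on that same
    edge ray (i.e. p is on the ray but is not its endpoint). *)
Definition sail (u w : pt) (p : pt) : Prop :=
  boundary (hull_cone u w) p /\
  ~ (exists e, (e = u \/ e = w) /\ ray e p /\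
       exists c, 0 <= c < 1 /\ boundary (hull_cone u w) (vscale c p)).

Definition in_segment (a b p : pt) : Prop :=
  exists t, 0 <= t <= 1 /\ p = (fst a + t * (fst b - fst a), snd a + t * (snd b - snd a)).

(** A : Z -> R^2 is the vertex sequence of the sail of the angle (u, w), as a
    bi-infinite broken line oriented from the first edge (u) to the second (w):
    the sail is the union of the segments [A_k, A_{k+1}], every A_k is a break
    point, and the A_k progress from the u-edge towards the w-edge. *)
Definition sail_vertices (u w : pt) (A : Z -> pt) : Prop :=
  (forall p, sail u w p <-> exists k, in_segment (A k) (A (k + 1)%Z) p) /\
  (forall k, det (vsub (A (k - 1)%Z) (A k)) (vsub (A (k + 1)%Z) (A k)) <> 0) /\
  (forall k, 0 < det (A k) (A (k + 1)%Z) * det u w).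

(** LLS sequence (absolute values) of the broken line with vertices A:
    entry 2k   = |det(OA_k, OA_{k+1})|,
    entry 2k-1 = |det(A_kA_{k-1}, A_kA_{k+1}) / (a_{2k-2} a_{2k})|. *)
Definition lls (A : Z -> pt) (m : Z) : R :=
  let edge k := det (A k) (A (k + 1)%Z) in
  if Z.even m then Rabs (edge (m / 2)%Z)
  else let k := ((m + 1) / 2)%Z in
       Rabs (det (vsub (A (k - 1)%Z) (A k)) (vsub (A (k + 1)%Z) (A k))
             / (edge (k - 1)%Z * edge k)).

(** (u, w) spans (the closure of) one of the four cones cut out by the two
    eigenlines of M, with u on the contracting eigenline (|lambda| < 1) and w on
    the expanding one (|mu| > 1); the first edge of the angle is the u-edge. *)
Definition assoc_angle (M : mat2) (u w : pt) : Prop :=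
  det u w <> 0 /\
  exists lam mu, Rabs lam < 1 < Rabs mu /\
    act M u = vscale lam u /\ act M w = vscale mu w.

From Pilot Require Import Defs.
From Stdlib Require Import Reals ZArith List Lra Lia Psatz.
Open Scope R_scope.
Import ListNotations.

(** Extend the [a_k] [n]-periodically and let [v (-1) = (1, 0)], [v 0 = (0, 1)],
    [v (k + 1) = v (k - 1) + a_(k+1) v k]. The columns of [M] are [v (n - 1)] and [v n],
    so [M v k = v (k + n)]; moreover [det (v (k - 1)) (v k) = (-1)^k]. All [v k] lie on
    one side of the contracting eigenline and alternate sides of the expanding one, so
    for each cone of [M] the points [± v (2k + r)] (one sign, one parity [r]) lie in it.
    Two consecutive ones lie on the integer line [det (., v (2k + r + 1)) = ±1], whose
    form is positive on both edges of the cone and hence [>= 1] at every nonzero lattice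
    point of the cone: these points are the vertices of the sail, and every vertex
    sequence of the sail is a shift of them. Their LLS entries are
    [|det (v j) (v (j + 2))| = a_(j+2)] at edges and [a_(j+1)] at vertices, and [M^2]
    shifts them by [n] positions. *)

(** * Linear forms, segments, convex hulls and boundaries in the plane *)

Definition lin_form (c1 c2 : R) (p : pt) : R := c1 * fst p + c2 * snd p.

Lemma lin_form_det_l b q : det q b = lin_form (snd b) (- fst b) q.
Proof. unfold det, lin_form. ring. Qed.

Lemma lin_form_det_r a q : det a q = lin_form (- snd a) (fst a) q.
Proof. unfold det, lin_form. ring. Qed.

Lemma lin_form_div c1 c2 d q : lin_form c1 c2 q / d = lin_form (c1 / d) (c2 / d) q.
Proof. unfold lin_form, Rdiv. ring. Qed.

Lemma Rabs_fst_sub_le_dist p q : Rabs (fst p - fst q) <= Defs.dist p q.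
Proof.
  unfold Defs.dist. rewrite <- sqrt_Rsqr_abs. apply sqrt_le_1_alt.
  unfold Rsqr. pose proof (pow2_ge_0 (snd p - snd q)). nra.
Qed.

Lemma Rabs_snd_sub_le_dist p q : Rabs (snd p - snd q) <= Defs.dist p q.
Proof.
  unfold Defs.dist. rewrite <- sqrt_Rsqr_abs. apply sqrt_le_1_alt.
  unfold Rsqr. pose proof (pow2_ge_0 (fst p - fst q)). nra.
Qed.

Lemma dist_le_l1 p q : Defs.dist p q <= Rabs (fst p - fst q) + Rabs (snd p - snd q).
Proof.
  pose proof (Rabs_pos (fst p - fst q)); pose proof (Rabs_pos (snd p - snd q)).
  unfold Defs.dist. rewrite <- (sqrt_Rsqr (Rabs (fst p - fst q) + Rabs (snd p - snd q))) by lra.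
  apply sqrt_le_1_alt. rewrite <- (pow2_abs (fst p - fst q)), <- (pow2_abs (snd p - snd q)).
  unfold Rsqr. nra.
Qed.

Lemma dist_diag p : Defs.dist p p = 0.
Proof. unfold Defs.dist. rewrite !Rminus_diag, pow_i, Rplus_0_r by lia. apply sqrt_0. Qed.

Lemma lin_form_lipschitz c1 c2 p q :
  Rabs (lin_form c1 c2 q - lin_form c1 c2 p) <= (Rabs c1 + Rabs c2) * Defs.dist p q.
Proof.
  unfold lin_form.
  replace (c1 * fst q + c2 * snd q - (c1 * fst p + c2 * snd p))
    with (c1 * (fst q - fst p) + c2 * (snd q - snd p)) by ring.
  eapply Rle_trans; [apply Rabs_triang|].
  rewrite !Rabs_mult, (Rabs_minus_sym (fst q)), (Rabs_minus_sym (snd q)).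
  pose proof (Rabs_fst_sub_le_dist p q); pose proof (Rabs_snd_sub_le_dist p q).
  pose proof (Rabs_pos c1); pose proof (Rabs_pos c2).
  pose proof (Rabs_pos (fst p - fst q)); pose proof (Rabs_pos (snd p - snd q)).
  nra.
Qed.

Lemma lin_form_near c1 c2 p q e : 0 < e -> Defs.dist p q < e / (Rabs c1 + Rabs c2 + 1) ->
  Rabs (lin_form c1 c2 q - lin_form c1 c2 p) < e.
Proof.
  intros He Hd. pose proof (lin_form_lipschitz c1 c2 p q).
  pose proof (Rabs_pos c1); pose proof (Rabs_pos c2).
  set (A := Rabs c1 + Rabs c2) in *. assert (0 <= A) by (unfold A; lra). clearbody A.
  assert (A * Defs.dist p q <= A * (e / (A + 1))) by (apply Rmult_le_compat_l; lra).
  assert (A * (e / (A + 1)) < e).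
  { apply Rmult_lt_reg_r with (A + 1); [lra|].
    replace (A * (e / (A + 1)) * (A + 1)) with (A * e) by (field; lra). nra. }
  lra.
Qed.

Lemma basis_coords_near a b p m : 0 < m -> exists eps, 0 < eps /\ forall q, Defs.dist p q < eps ->
  Rabs (det q b / det a b - det p b / det a b) < m /\
  Rabs (det a q / det a b - det a p / det a b) < m.
Proof.
  intros Hm.
  set (cx1 := snd b / det a b); set (cx2 := - fst b / det a b).
  set (cy1 := - snd a / det a b); set (cy2 := fst a / det a b).
  assert (Ex : forall q, det q b / det a b = lin_form cx1 cx2 q)
    by (intro; rewrite lin_form_det_l, lin_form_div; reflexivity).
  assert (Ey : forall q, det a q / det a b = lin_form cy1 cy2 q)
    by (intro; rewrite lin_form_det_r, lin_form_div; reflexivity).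
  pose proof (Rabs_pos cx1); pose proof (Rabs_pos cx2).
  pose proof (Rabs_pos cy1); pose proof (Rabs_pos cy2).
  exists (Rmin (m / (Rabs cx1 + Rabs cx2 + 1)) (m / (Rabs cy1 + Rabs cy2 + 1))).
  split; [apply Rmin_glb_lt; apply Rdiv_lt_0_compat; lra|].
  intros q Hq. rewrite !Ex, !Ey. split; apply lin_form_near; auto.
  - eapply Rlt_le_trans; [exact Hq | apply Rmin_l].
  - eapply Rlt_le_trans; [exact Hq | apply Rmin_r].
Qed.

Lemma conv_lin_form_ge (S : pt -> Prop) c1 c2 b p :
  (forall q, S q -> b <= lin_form c1 c2 q) -> conv S p -> b <= lin_form c1 c2 p.
Proof.
  intros HS [l [Hl [Hw ->]]].
  enough (b * fold_right (fun c acc => fst c + acc) 0 l <=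
          lin_form c1 c2 (fold_right (fun c acc => (fst c * fst (snd c) + fst acc,
                                        fst c * snd (snd c) + snd acc)) O l)) as H
    by (rewrite Hw, Rmult_1_r in H; exact H).
  clear Hw. induction Hl as [|[t q] l [Ht Hq] _ IH]; unfold lin_form in *; simpl in *; [lra|].
  pose proof (Rmult_le_compat_l _ _ _ Ht (HS q Hq)). unfold lin_form in *. nra.
Qed.

Lemma boundary_lin_form_ge K c1 c2 b p :
  boundary K p -> (forall q, K q -> b <= lin_form c1 c2 q) -> b <= lin_form c1 c2 p.
Proof.
  intros Hb HK. destruct (Rle_or_lt b (lin_form c1 c2 p)) as [|Hlt]; auto.
  set (e := b - lin_form c1 c2 p).
  pose proof (Rabs_pos c1); pose proof (Rabs_pos c2).
  destruct (Hb (e / (Rabs c1 + Rabs c2 + 1))) as [[q [Kq Hq]] _].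
  { apply Rdiv_lt_0_compat; unfold e; lra. }
  pose proof (lin_form_near c1 c2 p q e ltac:(unfold e; lra) Hq) as Hn.
  pose proof (HK q Kq). pose proof (Rle_abs (lin_form c1 c2 q - lin_form c1 c2 p)).
  unfold e in Hn. lra.
Qed.

Lemma exists_IZR_gt r : 0 < r -> exists N : Z, (2 <= N)%Z /\ r < IZR N.
Proof.
  intros Hr. destruct (archimed r) as [H1 _]. exists (Z.max 2 (up r)). split; [lia|].
  eapply Rlt_le_trans; [apply H1|]. apply IZR_le. lia.
Qed.

Lemma basis_decomp a b p : det a b <> 0 ->
  p = ((det p b / det a b) * fst a + (det a p / det a b) * fst b,
       (det p b / det a b) * snd a + (det a p / det a b) * snd b).
Proof. intros H. rewrite (surjective_pairing p) at 1. unfold det in *. f_equal; field; auto. Qed.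

Lemma in_segment_left a b : in_segment a b a.
Proof. exists 0. split; [lra|]. rewrite !Rmult_0_l, !Rplus_0_r. apply surjective_pairing. Qed.

Lemma in_segment_cases a b p : in_segment a b p -> p = a \/ p = b \/
  exists t, 0 < t < 1 /\ p = (fst a + t * (fst b - fst a), snd a + t * (snd b - snd a)).
Proof.
  intros [t [Ht ->]].
  destruct (Req_dec t 0) as [->|h0]; [left|destruct (Req_dec t 1) as [->|h1]; [right; left|]].
  - rewrite !Rmult_0_l, !Rplus_0_r. symmetry; apply surjective_pairing.
  - rewrite !Rmult_1_l, !Rplus_minus. symmetry; apply surjective_pairing.
  - right; right. exists t. split; [lra|reflexivity].
Qed.

Lemma det_eq0_of_common_kernel c1 c2 X Y : (c1 <> 0 \/ c2 <> 0) ->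
  lin_form c1 c2 X = 0 -> lin_form c1 c2 Y = 0 -> det X Y = 0.
Proof.
  unfold lin_form, det. intros Hc H1 H2.
  assert (E1 : c1 * (fst X * snd Y - snd X * fst Y) =
               (c1 * fst X + c2 * snd X) * snd Y - snd X * (c1 * fst Y + c2 * snd Y)) by ring.
  assert (E2 : c2 * (fst X * snd Y - snd X * fst Y) =
               fst X * (c1 * fst Y + c2 * snd Y) - fst Y * (c1 * fst X + c2 * snd X)) by ring.
  rewrite H1, H2 in E1, E2.
  destruct Hc as [Hc|Hc]; [apply (Rmult_eq_reg_l c1)|apply (Rmult_eq_reg_l c2)]; auto; lra.
Qed.

Lemma det_eq0_of_parallel D X Y : (fst D <> 0 \/ snd D <> 0) ->
  det D X = 0 -> det D Y = 0 -> det X Y = 0.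
Proof.
  intros HD H1 H2. apply (det_eq0_of_common_kernel (- snd D) (fst D)).
  - destruct HD as [h|h]; [right; exact h|left; intro e; apply h; lra].
  - rewrite <- lin_form_det_r. exact H1.
  - rewrite <- lin_form_det_r. exact H2.
Qed.

Lemma pos_perturb a b : 0 < a -> exists d, 0 < d <= 1 /\ forall d', 0 < d' <= d -> 0 < a + d' * b.
Proof.
  intros Ha. pose proof (Rabs_pos b).
  exists (Rmin 1 (a / (Rabs b + 1))). split.
  - split; [apply Rmin_glb_lt; [lra|apply Rdiv_lt_0_compat; lra]|apply Rmin_l].
  - intros d' [Hd1 Hd2]. pose proof (Rmin_r 1 (a / (Rabs b + 1))).
    assert (d' * Rabs b <= a / (Rabs b + 1) * Rabs b) by (apply Rmult_le_compat_r; lra).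
    assert (a / (Rabs b + 1) * Rabs b < a).
    { apply Rmult_lt_reg_r with (Rabs b + 1); [lra|].
      replace (a / (Rabs b + 1) * Rabs b * (Rabs b + 1)) with (a * Rabs b) by (field; lra). nra. }
    pose proof (Rle_abs (- b)). rewrite Rabs_Ropp in *. nra.
Qed.

(** * Sequences indexed by [Z] *)

Section StrictlyIncreasing.
Variable g : Z -> R.
Hypothesis g_incr : forall k, g k < g (k + 1)%Z.

Lemma incr_lt a b : (a < b)%Z -> g a < g b.
Proof.
  intros Hab.
  assert (H : forall d : nat, g a < g (a + 1 + Z.of_nat d)%Z).
  { induction d as [|d IH].
    - replace (a + 1 + Z.of_nat 0)%Z with (a + 1)%Z by lia. auto.
    - eapply Rlt_trans; [apply IH|].
      replace (a + 1 + Z.of_nat (S d))%Z with (a + 1 + Z.of_nat d + 1)%Z by lia. auto. }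
  specialize (H (Z.to_nat (b - a - 1))).
  replace (a + 1 + Z.of_nat (Z.to_nat (b - a - 1)))%Z with b in H by lia. exact H.
Qed.

Lemma incr_le a b : (a <= b)%Z -> g a <= g b.
Proof.
  intros Hab. destruct (Z.eq_dec a b) as [->|]; [lra|]. left. apply incr_lt. lia.
Qed.

Lemma incr_lt_rev a b : g a < g b -> (a < b)%Z.
Proof. intros H. destruct (Z_lt_le_dec a b) as [|Hba]; auto. pose proof (incr_le b a Hba). lra. Qed.

Lemma incr_inj a b : g a = g b -> a = b.
Proof.
  intros H. destruct (Z.lt_total a b) as [h|[h|h]]; auto; pose proof (incr_lt _ _ h); lra.
Qed.

Lemma incr_bracket x : (exists k, g k <= x) -> (exists k, x < g k) ->
  exists k, g k <= x < g (k + 1)%Z.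
Proof.
  intros [k0 H0] [k1 H1].
  assert (H : forall d : nat, forall k, g k <= x -> x < g (k + Z.of_nat d)%Z ->
            exists k', g k' <= x < g (k' + 1)%Z).
  { induction d as [|d IH]; intros k Hk Hk'.
    - replace (k + Z.of_nat 0)%Z with k in Hk' by lia. lra.
    - destruct (Rlt_or_le x (g (k + 1)%Z)); [exists k; auto|].
      apply (IH (k + 1)%Z); auto.
      replace (k + 1 + Z.of_nat d)%Z with (k + Z.of_nat (S d))%Z by lia. exact Hk'. }
  assert (k0 < k1)%Z by (apply incr_lt_rev; lra).
  apply (H (Z.to_nat (k1 - k0)) k0); auto.
  replace (k0 + Z.of_nat (Z.to_nat (k1 - k0)))%Z with k1 by lia. exact H1.
Qed.

End StrictlyIncreasing.

Lemma Z_ind2 (P : Z -> Prop) : P (-1)%Z -> P 0%Z ->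
  (forall k, P (k - 1)%Z -> P k -> P (k + 1)%Z) ->
  (forall k, P k -> P (k + 1)%Z -> P (k - 1)%Z) -> forall k, P k.
Proof.
  intros Hm H0 Hu Hd.
  enough (H : forall k, P (k - 1)%Z /\ P k) by (intro k; apply H).
  intro k. induction k as [|k [IH1 IH2]|k [IH1 IH2]] using Z.peano_ind; [split; auto| |].
  - rewrite <- Z.add_1_r, Z.add_simpl_r. auto.
  - rewrite <- Z.sub_1_r. split; [apply Hd; [exact IH1|rewrite Z.sub_add; exact IH2]|exact IH1].
Qed.

Lemma Z_ind2_up (P : Z -> Prop) : P (-1)%Z -> P 0%Z ->
  (forall k, (0 <= k)%Z -> P (k - 1)%Z -> P k -> P (k + 1)%Z) -> forall k, (-1 <= k)%Z -> P k.
Proof.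
  intros Hm H0 Hu.
  assert (U : forall m : nat, P (Z.of_nat m - 1)%Z /\ P (Z.of_nat m)).
  { induction m as [|m [IH1 IH2]]; [simpl; auto|].
    replace (Z.of_nat (S m)) with (Z.of_nat m + 1)%Z by lia. rewrite Z.add_simpl_r.
    split; auto. apply Hu; auto. lia. }
  intros k Hk. destruct (Z.eq_dec k (-1)) as [->|]; auto.
  replace k with (Z.of_nat (Z.to_nat k)) by lia. apply U.
Qed.

Lemma Z_ind2_down (P : Z -> Prop) : P (-1)%Z -> P 0%Z ->
  (forall k, (k <= -1)%Z -> P k -> P (k + 1)%Z -> P (k - 1)%Z) -> forall k, (k <= 0)%Z -> P k.
Proof.
  intros Hm H0 Hd.
  assert (U : forall m : nat, P (- Z.of_nat m - 1)%Z /\ P (- Z.of_nat m)%Z).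
  { induction m as [|m [IH1 IH2]]; [simpl; auto|].
    replace (- Z.of_nat (S m))%Z with (- Z.of_nat m - 1)%Z by lia. split; auto.
    apply Hd; [lia|auto|]. rewrite Z.sub_add. exact IH2. }
  intros k Hk. replace k with (- Z.of_nat (Z.to_nat (- k)))%Z by lia. apply U.
Qed.

Lemma Z_ind_shift_down (P : Z -> Prop) (n b : Z) : (0 < n)%Z -> (forall k, (b <= k)%Z -> P k) ->
  (forall k, P (k + n)%Z -> P k) -> forall k, P k.
Proof.
  intros Hn Hb Hs.
  assert (H : forall m : nat, forall k, (b - Z.of_nat m * n <= k)%Z -> P k).
  { induction m as [|m IH]; intros k Hk; [apply Hb; lia|].
    destruct (Z_le_gt_dec b k); [apply Hb; auto|]. apply Hs, IH. lia. }
  intro k. apply (H (Z.to_nat (b - k))). destruct (Z_le_gt_dec b k); [lia|].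
  rewrite Z2Nat.id by lia. nia.
Qed.

Lemma Z_ind_shift_up (P : Z -> Prop) (n b : Z) : (0 < n)%Z -> (forall k, (k <= b)%Z -> P k) ->
  (forall k, P k -> P (k + n)%Z) -> forall k, P k.
Proof.
  intros Hn Hb Hs.
  assert (H : forall m : nat, forall k, (k <= b + Z.of_nat m * n)%Z -> P k).
  { induction m as [|m IH]; intros k Hk; [apply Hb; lia|].
    destruct (Z_le_gt_dec k b); [apply Hb; auto|].
    replace k with (k - n + n)%Z by lia. apply Hs, IH. lia. }
  intro k. apply (H (Z.to_nat (k - b))). destruct (Z_le_gt_dec k b); [lia|].
  rewrite Z2Nat.id by lia. nia.
Qed.

Definition altZ (k : Z) : Z := if Z.even k then 1%Z else (-1)%Z.
Definition alt (k : Z) : R := IZR (altZ k).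

Lemma alt_succ k : alt (k + 1) = - alt k.
Proof. unfold alt, altZ. rewrite Z.even_add. destruct (Z.even k); simpl; lra. Qed.

Lemma alt_add k l : alt (k + l) = alt k * alt l.
Proof. unfold alt, altZ. rewrite Z.even_add. destruct (Z.even k), (Z.even l); simpl; lra. Qed.

Lemma alt_sq k : alt k * alt k = 1.
Proof. unfold alt, altZ. destruct (Z.even k); simpl; lra. Qed.

Lemma alt_double k : alt (2 * k) = 1.
Proof. unfold alt, altZ. rewrite Z.even_mul. reflexivity. Qed.

Lemma alt_cases k : alt k = 1 \/ alt k = -1.
Proof. unfold alt, altZ. destruct (Z.even k); simpl; auto. Qed.

Lemma Rabs_alt k : Rabs (alt k) = 1.
Proof. destruct (alt_cases k) as [-> | ->]; unfold Rabs; destruct (Rcase_abs _); lra. Qed.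

Lemma shift_geometric_small (g : Z -> R) n q : 0 <= q < 1 -> (forall k, g (k + n)%Z = q * g k) ->
  forall e, 0 < e -> exists k, g k < e.
Proof.
  intros Hq Hg e He.
  assert (Hm : forall m : nat, g (Z.of_nat m * n)%Z = q ^ m * g 0%Z).
  { induction m as [|m IH]; [simpl; ring|].
    replace (Z.of_nat (S m) * n)%Z with (Z.of_nat m * n + n)%Z by lia.
    rewrite Hg, IH. simpl. ring. }
  destruct (Rle_or_lt (g 0%Z) 0) as [h|h]; [exists 0%Z; lra|].
  destruct (pow_lt_1_zero q) with (y := e / g 0%Z) as [N HN];
    [rewrite Rabs_pos_eq; lra|apply Rdiv_lt_0_compat; lra|].
  exists (Z.of_nat N * n)%Z. rewrite Hm.
  specialize (HN N (le_n N)). rewrite Rabs_pos_eq in HN by (apply pow_le; lra).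
  apply Rmult_lt_compat_r with (r := g 0%Z) in HN; auto.
  replace (e / g 0%Z * g 0%Z) with e in HN by (field; lra). exact HN.
Qed.

Lemma shift_geometric_small_rev (g : Z -> R) n q : 1 < q -> (forall k, g (k + n)%Z = q * g k) ->
  forall e, 0 < e -> exists k, g k < e.
Proof.
  intros Hq Hg e He.
  destruct (shift_geometric_small (fun k => g (- k)%Z) n (/ q)) with (e := e) as [k Hk]; auto.
  - split; [left; apply Rinv_0_lt_compat; lra|]. rewrite <- Rinv_1. apply Rinv_lt_contravar; lra.
  - intro k. pose proof (Hg (- (k + n))%Z) as H. replace (- (k + n) + n)%Z with (- k)%Z in H by ring.
    rewrite H. field. lra.
  - exists (- k)%Z. exact Hk.
Qed.

(** * A criterion for the vertex sequence of a sail *)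

Section SailCriterion.
Variables (u w : pt) (V : Z -> pt) (F : Z -> Z * Z).
Hypothesis uw_indep : det u w <> 0.

Definition ucoord (p : pt) := det p w / det u w.
Definition wcoord (p : pt) := det u p / det u w.
Definition slope (p : pt) := wcoord p / ucoord p.
Definition edge_form k : pt -> R := lin_form (IZR (fst (F k))) (IZR (snd (F k))).
Definition lattice_pt (q : pt) := cone u w q /\ integer_point q /\ q <> O.
Definition on_edge k p := in_segment (V k) (V (k + 1)%Z) p.

Let det_uw_nz : fst u * snd w - snd u * fst w <> 0 := uw_indep.

Lemma coord_decomp p : p = (ucoord p * fst u + wcoord p * fst w, ucoord p * snd u + wcoord p * snd w).
Proof. rewrite (surjective_pairing p) at 1. unfold ucoord, wcoord, det. f_equal; field; auto. Qed.

Lemma ucoord_lin p : ucoord p = lin_form (snd w / det u w) (- fst w / det u w) p.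
Proof. unfold ucoord. rewrite lin_form_det_l, lin_form_div. reflexivity. Qed.

Lemma wcoord_lin p : wcoord p = lin_form (- snd u / det u w) (fst u / det u w) p.
Proof. unfold wcoord. rewrite lin_form_det_r, lin_form_div. reflexivity. Qed.

Lemma ucoord_comb a b x y :
  ucoord (x * fst a + y * fst b, x * snd a + y * snd b) = x * ucoord a + y * ucoord b.
Proof. unfold ucoord, det; simpl. field. auto. Qed.

Lemma wcoord_comb a b x y :
  wcoord (x * fst a + y * fst b, x * snd a + y * snd b) = x * wcoord a + y * wcoord b.
Proof. unfold wcoord, det; simpl. field. auto. Qed.

Lemma edge_form_comb k a b x y :
  edge_form k (x * fst a + y * fst b, x * snd a + y * snd b) = x * edge_form k a + y * edge_form k b.
Proof. unfold edge_form, lin_form; simpl. ring. Qed.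

Lemma ucoord_scale c p : ucoord (vscale c p) = c * ucoord p.
Proof. unfold ucoord, vscale, det; simpl. field. auto. Qed.

Lemma wcoord_scale c p : wcoord (vscale c p) = c * wcoord p.
Proof. unfold wcoord, vscale, det; simpl. field. auto. Qed.

Lemma ucoord_w : ucoord w = 0.
Proof. unfold ucoord, det. field. auto. Qed.

Lemma wcoord_u : wcoord u = 0.
Proof. unfold wcoord, det. field. auto. Qed.

Lemma cone_coords p : cone u w p <-> 0 <= ucoord p /\ 0 <= wcoord p.
Proof.
  split.
  - intros [s [t [Hs [Ht ->]]]]. rewrite ucoord_comb, wcoord_comb, ucoord_w, wcoord_u.
    unfold ucoord, wcoord. rewrite !Rdiv_diag by auto. lra.
  - intros [Hs Ht]. exists (ucoord p), (wcoord p). repeat split; auto. apply coord_decomp.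
Qed.

Lemma edge_form_coords k p : edge_form k p = ucoord p * edge_form k u + wcoord p * edge_form k w.
Proof. rewrite (coord_decomp p) at 1. apply edge_form_comb. Qed.

Lemma det_coords p q : det p q = (ucoord p * wcoord q - wcoord p * ucoord q) * det u w.
Proof. unfold ucoord, wcoord, det. field. auto. Qed.

Hypothesis V_int : forall k, integer_point (V k).
Hypothesis V_ucoord_pos : forall k, 0 < ucoord (V k).
Hypothesis V_wcoord_pos : forall k, 0 < wcoord (V k).
Hypothesis V_turn : forall k, 0 < det (V k) (V (k + 1)%Z) * det u w.
Hypothesis edge_form_left : forall k, edge_form k (V k) = 1.
Hypothesis edge_form_right : forall k, edge_form k (V (k + 1)%Z) = 1.
Hypothesis edge_form_u_pos : forall k, 0 < edge_form k u.
Hypothesis edge_form_w_pos : forall k, 0 < edge_form k w.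
Hypothesis edge_form_u_small : forall e, 0 < e -> exists k, edge_form k u < e.
Hypothesis edge_form_w_small : forall e, 0 < e -> exists k, edge_form k w < e.
Hypothesis slope_unbounded : forall r, exists k, r < slope (V k).
Hypothesis slope_to_zero : forall r, 0 < r -> exists k, slope (V k) < r.
Hypothesis V_break : forall k, det (vsub (V (k - 1)%Z) (V k)) (vsub (V (k + 1)%Z) (V k)) <> 0.

(** [edge_form k] is integer-valued on lattice points and positive on the angle minus [O]. *)
Lemma lattice_pt_edge_form k q : lattice_pt q -> 1 <= edge_form k q.
Proof.
  intros [Hc [[x [y E]] Hn]]. apply cone_coords in Hc. destruct Hc as [Hs Ht].
  assert (Hpos : 0 < edge_form k q).
  { rewrite edge_form_coords. specialize (edge_form_u_pos k). specialize (edge_form_w_pos k).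
    destruct Hs as [Hs|Hs]; [nra|]. destruct Ht as [Ht|Ht]; [nra|].
    exfalso. apply Hn. rewrite (coord_decomp q), <- Hs, <- Ht. unfold O. f_equal; ring. }
  revert Hpos. rewrite E. unfold edge_form, lin_form; simpl.
  rewrite <- !mult_IZR, <- plus_IZR. intro H. apply lt_IZR in H. apply IZR_le. lia.
Qed.

Lemma hull_edge_form k p : hull_cone u w p -> 1 <= edge_form k p.
Proof. apply conv_lin_form_ge. apply lattice_pt_edge_form. Qed.

Lemma hull_ucoord p : hull_cone u w p -> 0 <= ucoord p.
Proof.
  rewrite ucoord_lin. apply conv_lin_form_ge. intros q [Hq _].
  rewrite <- ucoord_lin. apply cone_coords in Hq. tauto.
Qed.

Lemma hull_wcoord p : hull_cone u w p -> 0 <= wcoord p.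
Proof.
  rewrite wcoord_lin. apply conv_lin_form_ge. intros q [Hq _].
  rewrite <- wcoord_lin. apply cone_coords in Hq. tauto.
Qed.

Lemma boundary_edge_form k p : boundary (hull_cone u w) p -> 1 <= edge_form k p.
Proof. intros Hb. apply (boundary_lin_form_ge _ _ _ _ _ Hb). apply hull_edge_form. Qed.

Lemma boundary_ucoord p : boundary (hull_cone u w) p -> 0 <= ucoord p.
Proof.
  intros Hb. rewrite ucoord_lin. apply (boundary_lin_form_ge _ _ _ _ _ Hb).
  intros q Hq. rewrite <- ucoord_lin. apply hull_ucoord, Hq.
Qed.

Lemma boundary_wcoord p : boundary (hull_cone u w) p -> 0 <= wcoord p.
Proof.
  intros Hb. rewrite wcoord_lin. apply (boundary_lin_form_ge _ _ _ _ _ Hb).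
  intros q Hq. rewrite <- wcoord_lin. apply hull_wcoord, Hq.
Qed.

Lemma lattice_pt_vertex_mult (N : Z) k : (1 <= N)%Z -> lattice_pt (vscale (IZR N) (V k)).
Proof.
  intro HN. assert (0 < IZR N) by (apply IZR_lt; lia).
  pose proof (V_ucoord_pos k); pose proof (V_wcoord_pos k).
  split; [|split].
  - apply cone_coords. rewrite ucoord_scale, wcoord_scale. split; nra.
  - destruct (V_int k) as [x [y ->]]. exists (N * x)%Z, (N * y)%Z.
    unfold vscale; simpl. rewrite !mult_IZR. reflexivity.
  - intro E. assert (Hz : ucoord (vscale (IZR N) (V k)) = 0) by (rewrite E; unfold ucoord, O, det; simpl; field; auto).
    rewrite ucoord_scale in Hz. nra.
Qed.

Lemma lattice_pt_vertex k : lattice_pt (V k).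
Proof.
  replace (V k) with (vscale (IZR 1) (V k)); [apply lattice_pt_vertex_mult; lia|].
  unfold vscale; simpl. rewrite !Rmult_1_l. symmetry; apply surjective_pairing.
Qed.

(** The hull contains the part of the sector spanned by [V k] and [V (k+1)] beyond
    their segment: it is covered by the quadrilateral with vertices [V k],
    [V (k+1)], [N V (k+1)], [N V k]. *)
Lemma hull_sector k (N : Z) x y : (2 <= N)%Z -> 0 <= x -> 0 <= y -> 1 <= x + y -> x + y <= IZR N ->
  hull_cone u w (x * fst (V k) + y * fst (V (k + 1)%Z), x * snd (V k) + y * snd (V (k + 1)%Z)).
Proof.
  intros HN Hx Hy H1 H2.
  assert (HN' : 2 <= IZR N) by (apply IZR_le; lia).
  set (s := x + y) in *. assert (Es : s = x + y) by reflexivity. clearbody s.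
  set (th := (IZR N - s) / (IZR N - 1)).
  assert (Hth0 : 0 <= th) by (unfold th; apply Rle_mult_inv_pos; lra).
  assert (Hth1 : th <= 1).
  { unfold th. apply Rmult_le_reg_r with (IZR N - 1); [lra|].
    unfold Rdiv. rewrite Rmult_assoc, Rinv_l; lra. }
  assert (Hs0 : 0 < s) by lra.
  assert (Hq : forall c, 0 <= c -> 0 <= c / s) by (intros; apply Rle_mult_inv_pos; lra).
  exists [(th * (x / s), V k); (th * (y / s), V (k + 1)%Z);
          ((1 - th) * (x / s), vscale (IZR N) (V k));
          ((1 - th) * (y / s), vscale (IZR N) (V (k + 1)%Z))].
  split; [|split].
  - repeat apply Forall_cons; try apply Forall_nil; split; simpl;
      try (apply Rmult_le_pos; auto; lra);
      solve [apply lattice_pt_vertex | apply lattice_pt_vertex_mult; lia].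
  - simpl. rewrite Es. field. lra.
  - assert (Hk : th + (1 - th) * IZR N = s) by (unfold th; field; lra).
    unfold vscale, O; simpl. f_equal; apply (Rmult_eq_reg_r s); try lra;
      rewrite <- Hk at 1; field_simplify; try lra; unfold th; field; lra.
Qed.

Lemma slope_det a b : 0 < ucoord a -> 0 < ucoord b ->
  det a b * det u w = (slope b - slope a) * (ucoord a * ucoord b * (det u w * det u w)).
Proof. intros. rewrite det_coords. unfold slope. field. split; lra. Qed.

Lemma slope_lt_iff a b : 0 < ucoord a -> 0 < ucoord b ->
  (slope a < slope b <-> 0 < det a b * det u w).
Proof.
  intros Ha Hb. rewrite (slope_det a b Ha Hb).
  assert (0 < ucoord a * ucoord b * (det u w * det u w))
    by (pose proof uw_indep; apply Rmult_lt_0_compat; nra).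
  split; intro; [nra|]. destruct (Rlt_or_le (slope a) (slope b)); auto. nra.
Qed.

Lemma slope_le_iff a b : 0 < ucoord a -> 0 < ucoord b ->
  (slope a <= slope b <-> 0 <= det a b * det u w).
Proof.
  intros Ha Hb. rewrite (slope_det a b Ha Hb).
  assert (0 < ucoord a * ucoord b * (det u w * det u w))
    by (pose proof uw_indep; apply Rmult_lt_0_compat; nra).
  split; intro; [nra|]. destruct (Rle_or_lt (slope a) (slope b)); auto. nra.
Qed.

Lemma slope_V_incr k : slope (V k) < slope (V (k + 1)%Z).
Proof. apply slope_lt_iff; auto. Qed.

Lemma on_edge_param k p : on_edge k p -> exists t, 0 <= t <= 1 /\
  p = ((1 - t) * fst (V k) + t * fst (V (k + 1)%Z), (1 - t) * snd (V k) + t * snd (V (k + 1)%Z)).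
Proof. intros [t [Ht ->]]. exists t. split; auto. f_equal; ring. Qed.

Lemma on_edge_coords k p : on_edge k p -> 0 < ucoord p /\ 0 < wcoord p.
Proof.
  intros H. destruct (on_edge_param k p H) as [t [Ht ->]]. rewrite ucoord_comb, wcoord_comb.
  pose proof (V_ucoord_pos k); pose proof (V_ucoord_pos (k + 1)%Z).
  pose proof (V_wcoord_pos k); pose proof (V_wcoord_pos (k + 1)%Z).
  split; nra.
Qed.

Lemma on_edge_form k p : on_edge k p -> edge_form k p = 1.
Proof.
  intros H. destruct (on_edge_param k p H) as [t [Ht ->]].
  rewrite edge_form_comb, edge_form_left, edge_form_right. ring.
Qed.

Lemma on_edge_det k p : on_edge k p ->
  0 <= det (V k) p * det u w /\ 0 <= det p (V (k + 1)%Z) * det u w.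
Proof.
  intros H. destruct (on_edge_param k p H) as [t [Ht ->]]. pose proof (V_turn k).
  unfold det in *; simpl. split; nra.
Qed.

Lemma on_edge_hull k p : on_edge k p -> hull_cone u w p.
Proof.
  intros H. destruct (on_edge_param k p H) as [t [Ht ->]]. apply (hull_sector k 2); lia || lra.
Qed.

(** Shrinking a point of an edge towards [O] leaves the hull, since [edge_form k]
    drops below [1]. *)
Lemma on_edge_boundary k p : on_edge k p -> boundary (hull_cone u w) p.
Proof.
  intros Hp eps He. split.
  - exists p. split; [eapply on_edge_hull; eauto|]. rewrite dist_diag. exact He.
  - pose proof (Rabs_pos (fst p)); pose proof (Rabs_pos (snd p)).
    set (A := Rabs (fst p) + Rabs (snd p)).
    set (d := eps / (2 * (A + 1))).
    assert (Hd : 0 < d) by (unfold d, A; apply Rdiv_lt_0_compat; lra).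
    assert (HdA : d * (A + 1) = eps / 2) by (unfold d, A; field; lra).
    exists (vscale (1 - d) p). split.
    + intro Hin. apply (hull_edge_form k) in Hin.
      pose proof (on_edge_form k p Hp) as Hf.
      unfold edge_form, lin_form, vscale in *; simpl in *. nra.
    + eapply Rle_lt_trans; [apply dist_le_l1|]. unfold vscale; simpl.
      replace (fst p - (1 - d) * fst p) with (d * fst p) by ring.
      replace (snd p - (1 - d) * snd p) with (d * snd p) by ring.
      rewrite !Rabs_mult, (Rabs_pos_eq d) by lra. unfold A in HdA. nra.
Qed.

Lemma on_edge_sail k p : on_edge k p -> sail u w p.
Proof.
  intros Hp. destruct (on_edge_coords k p Hp) as [Hsp Htp].
  split; [apply (on_edge_boundary k), Hp|].
  intros [e [[-> | ->] [[t [Ht ->]] _]]].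
  - rewrite wcoord_scale, wcoord_u in Htp. lra.
  - rewrite ucoord_scale, ucoord_w in Hsp. lra.
Qed.

Lemma V_det_nz k : det (V k) (V (k + 1)%Z) <> 0.
Proof. intro E. pose proof (V_turn k). rewrite E in *. lra. Qed.

Lemma edge_form_scaled_lt1 z c : 0 <= c -> (forall e, 0 < e -> exists k, edge_form k z < e) ->
  exists k, c * edge_form k z < 1.
Proof.
  intros Hc Hsmall. destruct (Hsmall (1 / (c + 1))) as [k Hk]; [apply Rdiv_lt_0_compat; lra|].
  exists k. apply Rle_lt_trans with (c * (1 / (c + 1))); [apply Rmult_le_compat_l; lra|].
  apply Rmult_lt_reg_r with (c + 1); [lra|]. field_simplify; lra.
Qed.

Lemma boundary_coords_pos p : boundary (hull_cone u w) p -> 0 < ucoord p /\ 0 < wcoord p.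
Proof.
  intros Hb. pose proof (boundary_ucoord p Hb) as [Hs|Hs]; pose proof (boundary_wcoord p Hb) as [Ht|Ht].
  - auto.
  - destruct (edge_form_scaled_lt1 u (ucoord p) ltac:(lra) edge_form_u_small) as [k Hk].
    pose proof (boundary_edge_form k p Hb) as Hf. rewrite edge_form_coords, <- Ht in Hf. lra.
  - destruct (edge_form_scaled_lt1 w (wcoord p) ltac:(lra) edge_form_w_small) as [k Hk].
    pose proof (boundary_edge_form k p Hb) as Hf. rewrite edge_form_coords, <- Hs in Hf. lra.
  - destruct (edge_form_scaled_lt1 w (wcoord p) ltac:(lra) edge_form_w_small) as [k Hk].
    pose proof (boundary_edge_form k p Hb) as Hf. rewrite edge_form_coords, <- Hs in Hf. lra.
Qed.

(** Bracket the slope of [p] between those of consecutive vertices; then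
    [edge_form k p >= 1] gives [x + y >= 1]. *)
Lemma boundary_sector p : boundary (hull_cone u w) p -> exists k x y,
  0 < x /\ 0 <= y /\ 1 <= x + y /\
  p = (x * fst (V k) + y * fst (V (k + 1)%Z), x * snd (V k) + y * snd (V (k + 1)%Z)).
Proof.
  intros Hb. destruct (boundary_coords_pos p Hb) as [Hs Ht].
  destruct (incr_bracket (fun k => slope (V k)) slope_V_incr (slope p)) as [k [Hk1 Hk2]].
  { destruct (slope_to_zero (slope p)) as [k Hk]; [unfold slope; apply Rdiv_lt_0_compat; auto|].
    exists k. lra. }
  { apply slope_unbounded. }
  apply slope_le_iff in Hk1; auto. apply slope_lt_iff in Hk2; auto.
  pose proof (V_turn k) as Hdk.
  set (dk := det (V k) (V (k + 1)%Z)) in *.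
  exists k, (det p (V (k + 1)%Z) / dk), (det (V k) p / dk).
  pose proof (basis_decomp _ _ p (V_det_nz k)) as Ep. fold dk in Ep.
  split; [|split; [|split]].
  - replace (det p (V (k + 1)%Z) / dk) with (det p (V (k + 1)%Z) * det u w / (dk * det u w))
      by (field; split; auto; apply V_det_nz).
    apply Rdiv_lt_0_compat; auto.
  - replace (det (V k) p / dk) with (det (V k) p * det u w / (dk * det u w))
      by (field; split; auto; apply V_det_nz).
    apply Rle_mult_inv_pos; auto.
  - pose proof (boundary_edge_form k p Hb) as Hf.
    rewrite Ep, edge_form_comb, edge_form_left, edge_form_right in Hf. lra.
  - exact Ep.
Qed.

Lemma sector_not_boundary k x y : 0 < x -> 0 < y -> 1 < x + y ->
  ~ boundary (hull_cone u w)
      (x * fst (V k) + y * fst (V (k + 1)%Z), x * snd (V k) + y * snd (V (k + 1)%Z)).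
Proof.
  intros Hx Hy Hxy Hb.
  set (p := (x * fst (V k) + y * fst (V (k + 1)%Z), x * snd (V k) + y * snd (V (k + 1)%Z))) in *.
  pose proof (V_det_nz k) as Hdk.
  assert (Px : det p (V (k + 1)%Z) / det (V k) (V (k + 1)%Z) = x)
    by (unfold p, det in *; simpl; field; auto).
  assert (Py : det (V k) p / det (V k) (V (k + 1)%Z) = y)
    by (unfold p, det in *; simpl; field; auto).
  set (m := Rmin (Rmin x y) (x + y - 1) / 2).
  pose proof (Rmin_l (Rmin x y) (x + y - 1)); pose proof (Rmin_r (Rmin x y) (x + y - 1)).
  pose proof (Rmin_l x y); pose proof (Rmin_r x y).
  assert (Hm : 0 < m) by (unfold m; repeat apply Rmin_glb_lt || apply Rdiv_lt_0_compat; lra).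
  destruct (exists_IZR_gt (2 * (x + y))) as [N [HN2 HN]]; [lra|].
  destruct (basis_coords_near (V k) (V (k + 1)%Z) p m Hm) as [eps [Heps Hnear]].
  destruct (Hb eps Heps) as [_ [q [Hq Hdq]]]. apply Hq.
  destruct (Hnear q Hdq) as [Dx Dy]. rewrite Px in Dx. rewrite Py in Dy.
  apply Rabs_def2 in Dx, Dy. fold m in Dx, Dy.
  rewrite (basis_decomp _ _ q Hdk). apply (hull_sector k N); [lia|..]; unfold m in *; lra.
Qed.

(** Near a point beyond a vertex on its ray, the hull is covered by the two
    sectors adjacent to that ray. *)
Lemma ray_not_boundary k x : 1 < x ->
  ~ boundary (hull_cone u w)
      (x * fst (V k) + 0 * fst (V (k + 1)%Z), x * snd (V k) + 0 * snd (V (k + 1)%Z)).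
Proof.
  intros Hx Hb.
  set (p := (x * fst (V k) + 0 * fst (V (k + 1)%Z), x * snd (V k) + 0 * snd (V (k + 1)%Z))) in *.
  pose proof (V_det_nz k) as Hdk. pose proof (V_det_nz (k - 1)) as Hdk'.
  replace (k - 1 + 1)%Z with k in Hdk' by lia.
  set (dk := det (V k) (V (k + 1)%Z)) in *. set (dk' := det (V (k - 1)%Z) (V k)) in *.
  assert (Px : det p (V (k + 1)%Z) / dk = x) by (unfold p, dk, det in *; simpl; field; auto).
  assert (Py : det (V k) p / dk = 0) by (unfold p, dk, det in *; simpl; field; auto).
  assert (Px' : det p (V k) / dk' = 0) by (unfold p, dk', det in *; simpl; field; auto).
  assert (Py' : det (V (k - 1)%Z) p / dk' = x) by (unfold p, dk', det in *; simpl; field; auto).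
  set (m := Rmin (x - 1) 1 / 2).
  pose proof (Rmin_l (x - 1) 1); pose proof (Rmin_r (x - 1) 1).
  assert (Hm : 0 < m) by (unfold m; apply Rdiv_lt_0_compat; [apply Rmin_glb_lt|]; lra).
  destruct (exists_IZR_gt (2 * x)) as [N [HN2 HN]]; [lra|].
  destruct (basis_coords_near (V k) (V (k + 1)%Z) p m Hm) as [eps1 [Heps1 Hnear1]].
  destruct (basis_coords_near (V (k - 1)%Z) (V k) p m Hm) as [eps2 [Heps2 Hnear2]].
  destruct (Hb (Rmin eps1 eps2)) as [_ [q [Hq Hdq]]]; [apply Rmin_glb_lt; auto|]. apply Hq.
  destruct (Hnear1 q) as [Dx Dy]; [eapply Rlt_le_trans; [exact Hdq|apply Rmin_l]|].
  destruct (Hnear2 q) as [Dx' Dy']; [eapply Rlt_le_trans; [exact Hdq|apply Rmin_r]|].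
  fold dk in Dx, Dy. fold dk' in Dx', Dy'.
  rewrite Px in Dx. rewrite Py in Dy. rewrite Px' in Dx'. rewrite Py' in Dy'.
  apply Rabs_def2 in Dx, Dy, Dx', Dy'.
  destruct (Rle_or_lt 0 (det (V k) q / dk)) as [Hyq|Hyq].
  - rewrite (basis_decomp _ _ q Hdk); fold dk. apply (hull_sector k N); [lia|..]; unfold m in *; lra.
  - assert (Hxq : 0 < det q (V k) / dk').
    { pose proof (V_turn k) as T. pose proof (V_turn (k - 1)) as T'.
      replace (k - 1 + 1)%Z with k in T' by lia. fold dk in T. fold dk' in T'.
      assert (E : det q (V k) / dk' * (dk' * det u w) = - (det (V k) q / dk) * (dk * det u w))
        by (unfold dk, dk', det in *; field; split; auto).
      destruct (Rlt_or_le 0 (det q (V k) / dk')) as [h|h]; auto. nra. }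
    rewrite (basis_decomp _ _ q Hdk'); fold dk'.
    pose proof (hull_sector (k - 1) N (det q (V k) / dk') (det (V (k - 1)%Z) q / dk')) as HR.
    replace (k - 1 + 1)%Z with k in HR by lia. apply HR; [lia|..]; unfold m in *; lra.
Qed.

Lemma boundary_on_edge p : boundary (hull_cone u w) p -> exists k, on_edge k p.
Proof.
  intros Hb. destruct (boundary_sector p Hb) as [k [x [y [Hx [Hy [Hxy ->]]]]]].
  destruct (Req_dec (x + y) 1) as [E|E].
  - exists k, y. split; [lra|]. replace x with (1 - y) by lra. f_equal; ring.
  - exfalso. destruct Hy as [Hy| <-].
    + exact (sector_not_boundary k x y Hx Hy ltac:(lra) Hb).
    + exact (ray_not_boundary k x ltac:(lra) Hb).
Qed.

Theorem sail_vertices_criterion : sail_vertices u w V.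
Proof.
  split; [|split]; auto. intro p. split.
  - intros [Hb _]. apply boundary_on_edge, Hb.
  - intros [k Hk]. apply (on_edge_sail k), Hk.
Qed.

Lemma edge_form_nonzero m : IZR (fst (F m)) <> 0 \/ IZR (snd (F m)) <> 0.
Proof.
  destruct (Req_dec (IZR (fst (F m))) 0) as [h1|h1]; auto.
  destruct (Req_dec (IZR (snd (F m))) 0) as [h2|h2]; auto.
  exfalso. pose proof (edge_form_left m) as H. unfold edge_form, lin_form in H.
  rewrite h1, h2 in H. lra.
Qed.

Lemma edge_form_vsub m X Y : edge_form m (vsub X Y) = edge_form m X - edge_form m Y.
Proof. unfold edge_form, lin_form, vsub; simpl. ring. Qed.

Lemma det_eq0_of_edge_form m X Y :
  edge_form m X = 0 -> edge_form m Y = 0 -> det X Y = 0.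
Proof. apply det_eq0_of_common_kernel, edge_form_nonzero. Qed.

(** Points of the segment from [Y] to [X] close enough to [Y] stay strictly inside the
    sector of edge [m], so they lie on edge [m] itself. *)
Lemma edge_line_extends m Y X :
  0 < det (V m) Y * det u w -> 0 < det Y (V (m + 1)%Z) * det u w -> edge_form m Y = 1 ->
  (forall d, 0 < d <= 1 -> exists i, on_edge i (fst Y + d * (fst X - fst Y), snd Y + d * (snd X - snd Y))) ->
  edge_form m X = 1.
Proof.
  intros H1 H2 HY HX.
  destruct (pos_perturb _ (det (V m) (vsub X Y) * det u w) H1) as [d1 [Hd1 Hd1']].
  destruct (pos_perturb _ (det (vsub X Y) (V (m + 1)%Z) * det u w) H2) as [d2 [Hd2 Hd2']].
  set (d := Rmin d1 d2).
  pose proof (Rmin_l d1 d2); pose proof (Rmin_r d1 d2).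
  assert (Hd : 0 < d <= 1) by (unfold d; split; [apply Rmin_glb_lt|]; lra).
  set (Q := (fst Y + d * (fst X - fst Y), snd Y + d * (snd X - snd Y))).
  destruct (HX d Hd) as [i Hi]. fold Q in Hi.
  assert (Q1 : 0 < det (V m) Q * det u w).
  { replace (det (V m) Q * det u w) with (det (V m) Y * det u w + d * (det (V m) (vsub X Y) * det u w))
      by (unfold Q, det, vsub; simpl; ring).
    apply Hd1'. unfold d in *. lra. }
  assert (Q2 : 0 < det Q (V (m + 1)%Z) * det u w).
  { replace (det Q (V (m + 1)%Z) * det u w)
      with (det Y (V (m + 1)%Z) * det u w + d * (det (vsub X Y) (V (m + 1)%Z) * det u w))
      by (unfold Q, det, vsub; simpl; ring).
    apply Hd2'. unfold d in *. lra. }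
  destruct (on_edge_coords i Q Hi) as [HsQ _]. destruct (on_edge_det i Q Hi) as [Hi1 Hi2].
  apply slope_le_iff in Hi1, Hi2; auto. apply slope_lt_iff in Q1, Q2; auto.
  assert (i = m) as ->.
  { destruct (Z.lt_total i m) as [h|[h|h]]; auto; exfalso.
    - pose proof (incr_le _ slope_V_incr (i + 1) m ltac:(lia)). lra.
    - pose proof (incr_le _ slope_V_incr (m + 1) i ltac:(lia)). lra. }
  pose proof (on_edge_form m Q Hi) as HQ.
  replace (edge_form m Q) with (edge_form m Y + d * (edge_form m X - edge_form m Y)) in HQ
    by (unfold Q, edge_form, lin_form; simpl; ring).
  rewrite HY in HQ. assert (d * (edge_form m X - 1) = 0) as Hz by lra.
  apply Rmult_integral in Hz. destruct Hz; lra.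
Qed.

Lemma sail_vertex_in_V A : sail_vertices u w A -> forall k, exists m, A k = V m.
Proof.
  intros [HS [HC HO]] k.
  assert (Hon : forall i p, in_segment (A i) (A (i + 1)%Z) p -> exists m, on_edge m p)
    by (intros i p Hp; apply boundary_on_edge, HS; eauto).
  destruct (Hon k (A k) (in_segment_left _ _)) as [m Hm].
  destruct (in_segment_cases _ _ _ Hm) as [E|[E|[t [Ht E]]]];
    [exists m; exact E|exists (m + 1)%Z; exact E|exfalso].
  pose proof (V_turn m).
  assert (S1 : 0 < det (V m) (A k) * det u w) by (rewrite E; unfold det in *; simpl; nra).
  assert (S2 : 0 < det (A k) (V (m + 1)%Z) * det u w) by (rewrite E; unfold det in *; simpl; nra).
  assert (Fk : edge_form m (A k) = 1) by (apply (on_edge_form m); exists t; split; [lra|exact E]).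
  assert (Fn : edge_form m (A (k + 1)%Z) = 1).
  { apply (edge_line_extends m (A k)); auto.
    intros d Hd. apply (Hon k). exists d. split; [lra|reflexivity]. }
  assert (Fp : edge_form m (A (k - 1)%Z) = 1).
  { apply (edge_line_extends m (A k)); auto.
    intros d Hd. apply (Hon (k - 1)%Z). replace (k - 1 + 1)%Z with k by lia.
    exists (1 - d). split; [lra|f_equal; ring]. }
  apply (HC k), (det_eq0_of_edge_form m); rewrite edge_form_vsub; lra.
Qed.

(** A vertex [V m] inside a segment of the broken line [A] would make both lines
    through [V m] (of edges [m - 1] and [m]) contain that segment. *)
Lemma V_in_sail_vertices A : sail_vertices u w A -> forall m, exists k, A k = V m.
Proof.
  intros HA m. pose proof (sail_vertex_in_V A HA) as HAV. destruct HA as [HS [HC HO]].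
  destruct (proj1 (HS (V m))) as [k Hk]; [apply (on_edge_sail m), in_segment_left|].
  destruct (in_segment_cases _ _ _ Hk) as [E|[E|[t [Ht E]]]];
    [exists k; auto|exists (k + 1)%Z; auto|exfalso].
  assert (Hends : forall j, edge_form j (V m) = 1 ->
            edge_form j (vsub (A (k + 1)%Z) (A k)) = 0).
  { intros j Hj. destruct (HAV k) as [i Ei]. destruct (HAV (k + 1)%Z) as [i' Ei'].
    pose proof (lattice_pt_edge_form j _ (lattice_pt_vertex i)) as P1.
    pose proof (lattice_pt_edge_form j _ (lattice_pt_vertex i')) as P2.
    rewrite <- Ei in P1. rewrite <- Ei' in P2.
    replace (edge_form j (V m)) with ((1 - t) * edge_form j (A k) + t * edge_form j (A (k + 1)%Z)) in Hj
      by (rewrite E; unfold edge_form, lin_form; simpl; ring).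
    rewrite edge_form_vsub. nra. }
  assert (Hm1 : edge_form (m - 1)%Z (V m) = 1).
  { pose proof (edge_form_right (m - 1)%Z) as H. replace (m - 1 + 1)%Z with m in H by lia. exact H. }
  set (D := vsub (A (k + 1)%Z) (A k)) in *.
  assert (HD : fst D <> 0 \/ snd D <> 0).
  { destruct (Req_dec (fst D) 0) as [a|a]; auto. destruct (Req_dec (snd D) 0) as [b|b]; auto.
    exfalso. pose proof (HO k) as H. unfold D, vsub, det in *; simpl in *.
    replace (fst (A (k + 1)%Z)) with (fst (A k)) in H by lra.
    replace (snd (A (k + 1)%Z)) with (snd (A k)) in H by lra. lra. }
  apply (V_break m), (det_eq0_of_parallel D); auto.
  - apply (det_eq0_of_edge_form (m - 1)%Z); [apply Hends, Hm1|].
    rewrite edge_form_vsub, edge_form_left, Hm1. ring.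
  - apply (det_eq0_of_edge_form m); [apply Hends, edge_form_left|].
    rewrite edge_form_vsub, edge_form_left, edge_form_right. ring.
Qed.

Theorem sail_vertices_shift A : sail_vertices u w A -> exists c, forall k, A k = V (k + c).
Proof.
  intros HA. pose proof (sail_vertex_in_V A HA) as HAV. pose proof (V_in_sail_vertices A HA) as HVA.
  assert (slope_A_incr : forall k, slope (A k) < slope (A (k + 1)%Z)).
  { intro k. destruct (HAV k) as [m Hm]. destruct (HAV (k + 1)%Z) as [m' Hm'].
    apply slope_lt_iff; [rewrite Hm|rewrite Hm'|destruct HA as [_ [_ HO]]]; auto. }
  assert (next : forall k m, A k = V m -> A (k + 1)%Z = V (m + 1)%Z).
  { intros k m Hm. destruct (HAV (k + 1)%Z) as [m' Hm'].
    assert (m < m')%Z.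
    { apply (incr_lt_rev _ slope_V_incr). rewrite <- Hm, <- Hm'. apply slope_A_incr. }
    destruct (Z.eq_dec m' (m + 1)) as [<-|ne]; auto. exfalso.
    destruct (HVA (m + 1)%Z) as [k' Hk'].
    assert (k < k')%Z.
    { apply (incr_lt_rev _ slope_A_incr). rewrite Hm, Hk'. apply (incr_lt _ slope_V_incr). lia. }
    assert (k' < k + 1)%Z.
    { apply (incr_lt_rev _ slope_A_incr). rewrite Hm', Hk'. apply (incr_lt _ slope_V_incr). lia. }
    lia. }
  assert (prev : forall k m, A k = V m -> A (k - 1)%Z = V (m - 1)%Z).
  { intros k m Hm. destruct (HAV (k - 1)%Z) as [m' Hm']. rewrite Hm'. f_equal.
    pose proof (next _ _ Hm') as Hn. replace (k - 1 + 1)%Z with k in Hn by lia.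
    assert (m = m' + 1)%Z by (apply (incr_inj _ slope_V_incr); cbv beta; rewrite <- Hm, Hn; reflexivity).
    lia. }
  destruct (HAV 0%Z) as [c Hc]. exists c.
  intro k. induction k as [|k IH|k IH] using Z.peano_ind; [exact Hc| |].
  - rewrite <- Z.add_1_r. replace (k + 1 + c)%Z with (k + c + 1)%Z by lia. apply next, IH.
  - rewrite <- Z.sub_1_r. replace (k - 1 + c)%Z with (k + c - 1)%Z by lia. apply prev, IH.
Qed.

End SailCriterion.

(** * Continuants *)

Lemma act_mmul A B p : act (mmul A B) p = act A (act B p).
Proof. unfold act, mmul; simpl. rewrite !plus_IZR, !mult_IZR. f_equal; ring. Qed.

Lemma firstn_succ_nth {X} (l : list X) m d : (m < length l)%nat ->
  firstn (S m) l = firstn m l ++ [nth m l d].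
Proof.
  revert m. induction l as [|x l IH]; intros m Hm; simpl in *; [lia|].
  destruct m; [reflexivity|]. simpl. f_equal. apply IH. lia.
Qed.

Section PeriodicCoefficients.
Variable a : list Z.
Hypothesis a_nonempty : (0 < length a)%nat.
Hypothesis a_pos : Forall (fun x => (0 < x)%Z) a.

Definition period : Z := Z.of_nat (length a).

(** [coef k] is [a_k] for [1 <= k <= n] (1-based), extended [n]-periodically. *)
Definition coef (k : Z) : Z := nth (Z.to_nat ((k - 1) mod period)) a 0%Z.

Lemma period_pos : (0 < period)%Z.
Proof. unfold period. lia. Qed.

Lemma coef_pos k : (1 <= coef k)%Z.
Proof.
  unfold coef. pose proof (Z.mod_pos_bound (k - 1) period period_pos).
  assert (Z.to_nat ((k - 1) mod period) < length a)%nat by (unfold period in *; lia).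
  rewrite Forall_nth in a_pos. specialize (a_pos _ 0%Z H0). lia.
Qed.

Lemma coef_periodic k : coef (k + period) = coef k.
Proof.
  unfold coef. replace (k + period - 1)%Z with (k - 1 + 1 * period)%Z by ring.
  rewrite Z_mod_plus_full. reflexivity.
Qed.

Lemma coef_nth i : (i < length a)%nat -> coef (Z.of_nat i + 1) = nth i a 0%Z.
Proof.
  intros Hi. unfold coef. rewrite Z.add_simpl_r, Z.mod_small by (unfold period; lia).
  rewrite Nat2Z.id. reflexivity.
Qed.

(** The continuant vectors [v k] are determined by [v (-1) = (1, 0)], [v 0 = (0, 1)]
    and [v (k + 1) = v (k - 1) + coef (k + 1) * v k]; [cont_fwd m] is the pair
    [(v (m - 1), v m)] and [cont_bwd m] the pair [(v (- m - 1), v (- m))]. *)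
Fixpoint cont_fwd (m : nat) : (Z * Z) * (Z * Z) :=
  match m with
  | Datatypes.O => ((1, 0), (0, 1))%Z
  | S m' => let '(p, q) := cont_fwd m' in
            (q, (fst p + coef (Z.of_nat m' + 1) * fst q, snd p + coef (Z.of_nat m' + 1) * snd q))%Z
  end.

Fixpoint cont_bwd (m : nat) : (Z * Z) * (Z * Z) :=
  match m with
  | Datatypes.O => ((1, 0), (0, 1))%Z
  | S m' => let '(p, q) := cont_bwd m' in
            ((fst q - coef (- Z.of_nat m') * fst p, snd q - coef (- Z.of_nat m') * snd p), p)%Z
  end.

Definition contZ (k : Z) : Z * Z :=
  if (0 <=? k)%Z then snd (cont_fwd (Z.to_nat k)) else fst (cont_bwd (Z.to_nat (- k - 1))).

Lemma cont_fwd_fst m : fst (cont_fwd m) = contZ (Z.of_nat m - 1).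
Proof.
  destruct m as [|m]; [reflexivity|].
  unfold contZ. replace (0 <=? Z.of_nat (S m) - 1)%Z with true by (symmetry; apply Z.leb_le; lia).
  replace (Z.to_nat (Z.of_nat (S m) - 1)) with m by lia.
  simpl. destruct (cont_fwd m). reflexivity.
Qed.

Lemma cont_bwd_snd m : snd (cont_bwd m) = contZ (- Z.of_nat m).
Proof.
  destruct m as [|m]; [reflexivity|].
  unfold contZ. replace (0 <=? - Z.of_nat (S m))%Z with false by (symmetry; apply Z.leb_gt; lia).
  replace (Z.to_nat (- - Z.of_nat (S m) - 1)) with m by lia.
  simpl. destruct (cont_bwd m). reflexivity.
Qed.

Lemma contZ_rec k : contZ (k + 1) =
  (fst (contZ (k - 1)) + coef (k + 1) * fst (contZ k), snd (contZ (k - 1)) + coef (k + 1) * snd (contZ k))%Z.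
Proof.
  destruct (Z_le_gt_dec 0 k).
  - assert (E : contZ (k + 1) = snd (cont_fwd (S (Z.to_nat k)))).
    { unfold contZ. replace (0 <=? k + 1)%Z with true by (symmetry; apply Z.leb_le; lia).
      do 2 f_equal. lia. }
    assert (E2 : snd (cont_fwd (Z.to_nat k)) = contZ k).
    { unfold contZ. replace (0 <=? k)%Z with true by (symmetry; apply Z.leb_le; lia). reflexivity. }
    pose proof (cont_fwd_fst (Z.to_nat k)) as E1. rewrite Z2Nat.id in E1 by lia.
    rewrite E. simpl. destruct (cont_fwd (Z.to_nat k)) as [p q]. simpl in *. subst.
    rewrite Z2Nat.id by lia. reflexivity.
  - set (m := Z.to_nat (- k - 1)).
    assert (E : contZ (k - 1) = fst (cont_bwd (S m))).
    { unfold contZ. replace (0 <=? k - 1)%Z with false by (symmetry; apply Z.leb_gt; lia).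
      do 2 f_equal. unfold m. lia. }
    assert (E1 : fst (cont_bwd m) = contZ k).
    { unfold contZ. replace (0 <=? k)%Z with false by (symmetry; apply Z.leb_gt; lia). reflexivity. }
    pose proof (cont_bwd_snd m) as E2. replace (- Z.of_nat m)%Z with (k + 1)%Z in E2 by (unfold m; lia).
    simpl in E. destruct (cont_bwd m) as [p q]. simpl in *. subst p q.
    rewrite E. simpl. replace (- Z.of_nat m)%Z with (k + 1)%Z by (unfold m; lia).
    rewrite (surjective_pairing (contZ (k + 1))) at 1. f_equal; ring.
Qed.

Lemma Mprod_firstn m : (m <= length a)%nat ->
  Mprod (firstn m a) = Mat (fst (contZ (Z.of_nat m - 1))) (fst (contZ (Z.of_nat m)))
                           (snd (contZ (Z.of_nat m - 1))) (snd (contZ (Z.of_nat m))).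
Proof.
  induction m as [|m IH]; intros Hm; [reflexivity|].
  rewrite (firstn_succ_nth a m 0%Z) by lia. unfold Mprod. rewrite fold_left_app. cbn [fold_left].
  change (fold_left (fun M x => mmul M (elem x)) (firstn m a) mid) with (Mprod (firstn m a)).
  rewrite IH by lia. unfold mmul, elem; cbn [m11 m12 m21 m22].
  replace (Z.of_nat (S m)) with (Z.of_nat m + 1)%Z by lia.
  rewrite contZ_rec, coef_nth, Z.add_simpl_r by lia. cbn [fst snd]. f_equal; ring.
Qed.

Definition cont (k : Z) : pt := (IZR (fst (contZ k)), IZR (snd (contZ k))).
Definition coefR (k : Z) : R := IZR (coef k).
Definition r11 := IZR (fst (contZ (period - 1))).
Definition r12 := IZR (fst (contZ period)).
Definition r21 := IZR (snd (contZ (period - 1))).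
Definition r22 := IZR (snd (contZ period)).

Lemma act_M p : act (Mprod a) p = (r11 * fst p + r12 * snd p, r21 * fst p + r22 * snd p).
Proof. rewrite <- (firstn_all a) at 1. rewrite Mprod_firstn by lia. reflexivity. Qed.

Lemma act_M_scale c p : act (Mprod a) (vscale c p) = vscale c (act (Mprod a) p).
Proof. rewrite !act_M. unfold vscale; simpl. f_equal; ring. Qed.

Lemma coefR_ge1 k : 1 <= coefR k.
Proof. apply IZR_le, coef_pos. Qed.

Lemma coefR_periodic k : coefR (k + period) = coefR k.
Proof. unfold coefR. rewrite coef_periodic. reflexivity. Qed.

Lemma Rabs_coefR k : Rabs (coefR k) = coefR k.
Proof. apply Rabs_pos_eq. pose proof (coefR_ge1 k). lra. Qed.

Lemma cont_rec k : cont (k + 1) =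
  (fst (cont (k - 1)) + coefR (k + 1) * fst (cont k), snd (cont (k - 1)) + coefR (k + 1) * snd (cont k)).
Proof. unfold cont, coefR. rewrite contZ_rec. simpl. rewrite !plus_IZR, !mult_IZR. reflexivity. Qed.

Lemma cont_rec_back k : cont (k - 1) =
  (fst (cont (k + 1)) - coefR (k + 1) * fst (cont k), snd (cont (k + 1)) - coefR (k + 1) * snd (cont k)).
Proof. rewrite (cont_rec k). cbn [fst snd]. unfold cont. cbn [fst snd]. f_equal; ring. Qed.

Lemma act_M_cont k : act (Mprod a) (cont k) = cont (k + period).
Proof.
  induction k as [| |j H1 H2|j H1 H2] using Z_ind2.
  - rewrite act_M. change (cont (-1)) with (1, 0).
    replace (-1 + period)%Z with (period - 1)%Z by ring. unfold cont, r11, r21; simpl. f_equal; ring.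
  - rewrite act_M. change (cont 0) with (0, 1). unfold cont, r12, r22; simpl. f_equal; ring.
  - replace (j + 1 + period)%Z with (j + period + 1)%Z by ring.
    rewrite (cont_rec (j + period)). replace (j + period - 1)%Z with (j - 1 + period)%Z by ring.
    rewrite <- H1, <- H2. replace (j + period + 1)%Z with (j + 1 + period)%Z by ring.
    rewrite coefR_periodic, cont_rec, !act_M. simpl. f_equal; ring.
  - replace (j - 1 + period)%Z with (j + period - 1)%Z by ring.
    rewrite (cont_rec_back (j + period)). replace (j + period + 1)%Z with (j + 1 + period)%Z by ring.
    rewrite <- H1, <- H2, coefR_periodic, cont_rec_back, !act_M. simpl. f_equal; ring.
Qed.

Lemma det_cont k : det (cont (k - 1)) (cont k) = alt k.
Proof.
  induction k as [|j IH|j IH] using Z.peano_ind.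
  - unfold det, cont, alt, altZ. simpl. lra.
  - rewrite <- Z.add_1_r, Z.add_simpl_r, alt_succ, <- IH, cont_rec. unfold det; simpl. ring.
  - rewrite <- Z.sub_1_r, (cont_rec_back (j - 1)), Z.sub_add.
    pose proof (alt_succ (j - 1)) as S. rewrite Z.sub_add in S.
    transitivity (- det (cont (j - 1)) (cont j)); [unfold det; simpl; ring|]. rewrite IH, S. ring.
Qed.

Lemma det_cont_succ j : det (cont j) (cont (j + 1)) = alt (j + 1).
Proof. rewrite <- det_cont, Z.add_simpl_r. reflexivity. Qed.

Lemma contZ_nonneg (m : nat) :
  (0 <= fst (contZ (Z.of_nat m - 1)) /\ 0 <= fst (contZ (Z.of_nat m)) /\
   1 <= fst (contZ (Z.of_nat m - 1)) + fst (contZ (Z.of_nat m)) /\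
   0 <= snd (contZ (Z.of_nat m - 1)) /\ 1 <= snd (contZ (Z.of_nat m)))%Z.
Proof.
  induction m as [|m IH]; [compute; intuition discriminate|].
  replace (Z.of_nat (S m)) with (Z.of_nat m + 1)%Z by lia. rewrite Z.add_simpl_r, contZ_rec.
  cbn [fst snd]. pose proof (coef_pos (Z.of_nat m + 1)). nia.
Qed.

Lemma r11_nonneg : 0 <= r11.
Proof.
  unfold r11. apply IZR_le. pose proof (contZ_nonneg (Z.to_nat (period - 1))) as H.
  rewrite Z2Nat.id in H by (pose proof period_pos; lia). tauto.
Qed.

Lemma r21_ge1 : 1 <= r21.
Proof.
  unfold r21. apply IZR_le. pose proof (contZ_nonneg (Z.to_nat (period - 1))) as H.
  rewrite Z2Nat.id in H by (pose proof period_pos; lia). tauto.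
Qed.

Lemma r22_ge1 : 1 <= r22.
Proof.
  unfold r22. apply IZR_le. pose proof (contZ_nonneg (Z.to_nat period)) as H.
  rewrite Z2Nat.id in H by (pose proof period_pos; lia). tauto.
Qed.

Lemma r12_ge1 : 1 <= r12.
Proof.
  unfold r12. apply IZR_le. pose proof (contZ_nonneg (Z.to_nat (period - 1))) as H.
  rewrite Z2Nat.id in H by (pose proof period_pos; lia).
  replace period with (period - 1 + 1)%Z by ring. rewrite contZ_rec. simpl.
  pose proof (coef_pos (period - 1 + 1)). nia.
Qed.

(** * The eigenlines of [M] *)

Definition trM := r11 + r22.
Definition detM := r11 * r22 - r12 * r21.
Definition discM := (r11 - r22) * (r11 - r22) + 4 * r12 * r21.
Definition lam := (trM - sqrt discM) / 2.
Definition mu := (trM + sqrt discM) / 2.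
Definition u0 : pt := (r12, lam - r11).
Definition w0 : pt := (r12, mu - r11).

Lemma detM_alt : detM = alt period.
Proof. rewrite <- det_cont. unfold det, detM, cont, r11, r12, r21, r22. simpl. ring. Qed.

Lemma det_act_M p q : det (act (Mprod a) p) (act (Mprod a) q) = detM * det p q.
Proof. rewrite !act_M. unfold det, detM; simpl. ring. Qed.

Lemma discM_pos : 0 < discM.
Proof.
  unfold discM. pose proof r12_ge1; pose proof r21_ge1. pose proof (Rle_0_sqr (r11 - r22)).
  unfold Rsqr in *. nra.
Qed.

Lemma sqrt_discM_sq : sqrt discM * sqrt discM = discM.
Proof. apply sqrt_sqrt. left. apply discM_pos. Qed.

Lemma sqrt_discM_gt : Rabs (r11 - r22) < sqrt discM.
Proof.
  rewrite <- sqrt_Rsqr_abs. apply sqrt_lt_1_alt. unfold Rsqr, discM.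
  pose proof r12_ge1; pose proof r21_ge1. pose proof (Rle_0_sqr (r11 - r22)). unfold Rsqr in *.
  split; nra.
Qed.

Lemma lam_lt_r11 : lam < r11.
Proof.
  unfold lam, trM. pose proof sqrt_discM_gt.
  pose proof (Rle_abs (- (r11 - r22))). rewrite Rabs_Ropp in *. lra.
Qed.

Lemma mu_gt_r11 : r11 < mu.
Proof. unfold mu, trM. pose proof sqrt_discM_gt. pose proof (Rle_abs (r11 - r22)). lra. Qed.

Lemma lam_mu : lam * mu = detM.
Proof.
  unfold lam, mu. replace ((trM - sqrt discM) / 2 * ((trM + sqrt discM) / 2))
    with ((trM * trM - sqrt discM * sqrt discM) / 4) by field.
  rewrite sqrt_discM_sq. unfold trM, discM, detM. field.
Qed.

Lemma lam_add_mu : lam + mu = trM.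
Proof. unfold lam, mu. field. Qed.

Lemma mu_pos : 0 < mu.
Proof.
  unfold mu, trM. pose proof sqrt_discM_gt. pose proof (Rabs_pos (r11 - r22)).
  pose proof r11_nonneg. pose proof r22_ge1. lra.
Qed.

Lemma Rabs_lam_mu : Rabs lam * mu = 1.
Proof.
  rewrite <- (Rabs_pos_eq mu) by (left; apply mu_pos).
  rewrite <- Rabs_mult, lam_mu, detM_alt. apply Rabs_alt.
Qed.

(** [|lam| mu = 1] and [|lam| < mu]. *)
Lemma mu_gt1 : 1 < mu.
Proof.
  assert (Rabs lam < mu).
  { apply Rabs_def1; unfold lam, mu, trM; pose proof sqrt_discM_gt; pose proof (Rabs_pos (r11 - r22));
      pose proof r11_nonneg; pose proof r22_ge1; lra. }
  pose proof Rabs_lam_mu. pose proof mu_pos. pose proof (Rabs_pos lam). nra.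
Qed.

Lemma Rabs_lam_lt1 : Rabs lam < 1.
Proof. pose proof Rabs_lam_mu. pose proof mu_gt1. pose proof (Rabs_pos lam). nra. Qed.

Lemma lam_nz : lam <> 0.
Proof. intro h. pose proof Rabs_lam_mu. rewrite h, Rabs_R0 in *. lra. Qed.

Lemma eigval_root x : (x - lam) * (x - mu) = x * x - trM * x + detM.
Proof.
  replace ((x - lam) * (x - mu)) with (x * x - (lam + mu) * x + lam * mu) by ring.
  rewrite lam_add_mu, lam_mu. reflexivity.
Qed.

Lemma act_M_u0 : act (Mprod a) u0 = vscale lam u0.
Proof.
  pose proof (eigval_root lam). rewrite act_M. unfold u0, vscale, trM, detM in *; simpl.
  f_equal; nra.
Qed.

Lemma act_M_w0 : act (Mprod a) w0 = vscale mu w0.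
Proof.
  pose proof (eigval_root mu). rewrite act_M. unfold w0, vscale, trM, detM in *; simpl.
  f_equal; nra.
Qed.

Lemma det_u0_w0_pos : 0 < det u0 w0.
Proof.
  replace (det u0 w0) with (r12 * (mu - lam)) by (unfold det, u0, w0; simpl; ring).
  pose proof r12_ge1. pose proof sqrt_discM_gt. pose proof (Rabs_pos (r11 - r22)).
  apply Rmult_lt_0_compat; unfold mu, lam; lra.
Qed.

Lemma eigval_cases (p : pt) (x : R) : (fst p <> 0 \/ snd p <> 0) ->
  act (Mprod a) p = vscale x p -> x = lam \/ x = mu.
Proof.
  intros Hp E. rewrite act_M in E. unfold vscale in E. injection E as E1 E2.
  assert (K : det (r11 - x, r12) (r21, r22 - x) = 0).
  { apply (det_eq0_of_common_kernel (fst p) (snd p)); auto; unfold lin_form; simpl; lra. }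
  assert (H : (x - lam) * (x - mu) = 0) by (rewrite eigval_root; unfold det, trM, detM in *; simpl in *; lra).
  apply Rmult_integral in H. lra.
Qed.

Lemma eigvec_form (p : pt) (x : R) : act (Mprod a) p = vscale x p -> p = vscale (fst p / r12) (r12, x - r11).
Proof.
  intros E. rewrite act_M in E. unfold vscale in *. injection E as E1 E2. pose proof r12_ge1.
  rewrite (surjective_pairing p) at 1. simpl. f_equal; [field; lra|].
  apply (Rmult_eq_reg_l r12); [|lra]. field_simplify; lra.
Qed.

Lemma det_cont_rec j x : det (cont (j + 1)) x = det (cont (j - 1)) x + coefR (j + 1) * det (cont j) x.
Proof. rewrite cont_rec. unfold det; simpl. ring. Qed.

Lemma det_cont_u0_shift j : det (cont (j + period)) u0 = mu * det (cont j) u0.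
Proof.
  rewrite <- act_M_cont. apply (Rmult_eq_reg_l lam); [|apply lam_nz].
  transitivity (det (act (Mprod a) (cont j)) (vscale lam u0)); [unfold det, vscale; simpl; ring|].
  rewrite <- act_M_u0, det_act_M, <- lam_mu. ring.
Qed.

Lemma det_cont_w0_shift j : det (cont (j + period)) w0 = lam * det (cont j) w0.
Proof.
  rewrite <- act_M_cont. apply (Rmult_eq_reg_l mu); [|pose proof mu_pos; lra].
  transitivity (det (act (Mprod a) (cont j)) (vscale mu w0)); [unfold det, vscale; simpl; ring|].
  rewrite <- act_M_w0, det_act_M, <- lam_mu. ring.
Qed.

(** All [v j] lie on the same side of the contracting eigenline: true for [j = -1, 0],
    propagated forwards by the recurrence and backwards by [M]. *)
Lemma det_cont_u0_neg j : det (cont j) u0 < 0.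
Proof.
  apply (Z_ind_shift_down (fun j => det (cont j) u0 < 0) period (-1)); [apply period_pos| |].
  - apply Z_ind2_up.
    + change (cont (-1)) with (1, 0). unfold det, u0; simpl. pose proof lam_lt_r11. lra.
    + change (cont 0) with (0, 1). unfold det, u0; simpl. pose proof r12_ge1. lra.
    + intros k _ H1 H2. rewrite det_cont_rec. pose proof (coefR_ge1 (k + 1)). nra.
  - intros k H. rewrite det_cont_u0_shift in H. pose proof mu_pos. nra.
Qed.

(** The [v j] alternate between the two sides of the expanding eigenline: true for
    [j = -1, 0], propagated backwards by the recurrence and forwards by [M]. *)
Lemma det_cont_w0_alt j : 0 < det (cont j) w0 * alt (j + 1).
Proof.
  apply (Z_ind_shift_up (fun j => 0 < det (cont j) w0 * alt (j + 1)) period 0); [apply period_pos| |].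
  - apply Z_ind2_down.
    + change (cont (-1)) with (1, 0). unfold det, w0, alt, altZ; simpl. pose proof mu_gt_r11. lra.
    + change (cont 0) with (0, 1). unfold det, w0, alt, altZ; simpl. pose proof r12_ge1. lra.
    + intros k _ H1 H2. pose proof (det_cont_rec k w0) as E. pose proof (coefR_ge1 (k + 1)).
      rewrite Z.sub_add. rewrite alt_succ in H1. rewrite !alt_succ in H2. nra.
  - intros k H. rewrite det_cont_w0_shift. replace (k + period + 1)%Z with (k + 1 + period)%Z by ring.
    rewrite alt_add, <- detM_alt, <- lam_mu.
    replace (lam * det (cont k) w0 * (alt (k + 1) * (lam * mu)))
      with ((lam * lam * mu) * (det (cont k) w0 * alt (k + 1))) by ring.
    pose proof lam_nz. pose proof mu_pos.
    apply Rmult_lt_0_compat; auto. apply Rmult_lt_0_compat; auto. nra.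
Qed.

(** * The sails of [M] *)

(** The candidate vertices [t v (2k + r)], and the integer form [f_k] that equals [1]
    on the edge from vertex [k] to vertex [k + 1]: it is [t (-1)^j det(., v j)] with
    [j = 2k + r + 1], the continuant between the two vertices. *)
Definition vert (t r : Z) (k : Z) : pt := vscale (IZR t) (cont (2 * k + r)).

Definition vert_form (t r : Z) (k : Z) : Z * Z :=
  let j := (2 * k + r + 1)%Z in (t * altZ j * snd (contZ j), - (t * altZ j * fst (contZ j)))%Z.

Lemma vert_form_eq t r k q :
  edge_form (vert_form t r) k q = IZR t * alt (2 * k + r + 1) * det q (cont (2 * k + r + 1)).
Proof. unfold edge_form, lin_form, vert_form, alt, det, cont. simpl. rewrite !opp_IZR, !mult_IZR. ring. Qed.

Lemma det_vert_succ t r k :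
  det (vert t r k) (vert t r (k + 1)) = IZR t * IZR t * coefR (2 * k + r + 2) * alt (2 * k + r + 1).
Proof.
  unfold vert. replace (2 * (k + 1) + r)%Z with (2 * k + r + 1 + 1)%Z by ring.
  rewrite (cont_rec (2 * k + r + 1)), Z.add_simpl_r.
  replace (2 * k + r + 1 + 1)%Z with (2 * k + r + 2)%Z by ring.
  rewrite <- (det_cont_succ (2 * k + r)). unfold det, vscale; simpl. ring.
Qed.

Lemma det_vert_turn t r k :
  det (vsub (vert t r (k - 1)) (vert t r k)) (vsub (vert t r (k + 1)) (vert t r k)) =
  - (IZR t * IZR t) * coefR (2 * k + r) * coefR (2 * k + r + 1) * coefR (2 * k + r + 2) * alt (2 * k + r).
Proof.
  unfold vert. set (j := (2 * k + r)%Z).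
  replace (2 * (k - 1) + r)%Z with (j - 1 - 1)%Z by (unfold j; ring).
  replace (2 * (k + 1) + r)%Z with (j + 1 + 1)%Z by (unfold j; ring).
  rewrite (cont_rec_back (j - 1)), Z.sub_add, (cont_rec (j + 1)), Z.add_simpl_r, (cont_rec j).
  replace (j + 1 + 1)%Z with (j + 2)%Z by ring.
  rewrite <- (det_cont j). unfold det, vsub, vscale; simpl. ring.
Qed.

Lemma lls_vert t r : (t = 1 \/ t = -1)%Z -> forall m, lls (vert t r) m = coefR (m + r + 2).
Proof.
  intros Ht m. assert (T : IZR t * IZR t = 1) by (destruct Ht as [-> | ->]; simpl; lra).
  unfold lls. destruct (Z.even m) eqn:Em.
  - apply Z.even_spec in Em. destruct Em as [i ->].
    rewrite Z.mul_comm, Z.div_mul, Z.mul_comm by lia.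
    rewrite det_vert_succ, T, !Rabs_mult, Rabs_R1, Rabs_coefR, Rabs_alt. ring.
  - assert (Z.odd m = true) as Om by (rewrite <- Z.negb_even, Em; reflexivity).
    apply Z.odd_spec in Om. destruct Om as [i ->].
    replace ((2 * i + 1 + 1) / 2)%Z with (i + 1)%Z
      by (replace (2 * i + 1 + 1)%Z with ((i + 1) * 2)%Z by ring; rewrite Z.div_mul; lia).
    rewrite det_vert_turn, Z.add_simpl_r, !det_vert_succ, T.
    replace (2 * (i + 1) + r)%Z with (2 * i + r + 2)%Z by ring.
    replace (2 * (i + 1) + r + 1)%Z with (2 * i + r + 3)%Z by ring.
    replace (2 * (i + 1) + r + 2)%Z with (2 * i + r + 4)%Z by ring.
    replace (2 * i + r + 2 + 1)%Z with (2 * i + r + 3)%Z by ring.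
    replace (2 * i + r + 2 + 2)%Z with (2 * i + r + 4)%Z by ring.
    replace (2 * i + 1 + r + 2)%Z with (2 * i + r + 3)%Z by ring.
    pose proof (coefR_ge1 (2 * i + r + 2)); pose proof (coefR_ge1 (2 * i + r + 3));
      pose proof (coefR_ge1 (2 * i + r + 4)).
    unfold Rdiv. rewrite Rabs_mult, Rabs_inv, !Rabs_mult, !Rabs_Ropp, !Rabs_R1, !Rabs_coefR, !Rabs_alt.
    field. lra.
Qed.

Lemma act_M2_vert t r k : act (mmul (Mprod a) (Mprod a)) (vert t r k) = vert t r (k + period).
Proof.
  rewrite act_mmul. unfold vert. rewrite !act_M_scale, !act_M_cont. do 2 f_equal. ring.
Qed.

Lemma vert_shift t r c k : vert t r (k + c) = vert t (r + 2 * c) k.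
Proof. unfold vert. do 2 f_equal. ring. Qed.

Lemma alt_vert_index r k : alt (2 * k + r + 1) = alt (r + 1).
Proof. rewrite <- Z.add_assoc, alt_add, alt_double. ring. Qed.

Section SignedVertices.
Variables (al be : R) (t r : Z).
Hypothesis t_unit : (t = 1 \/ t = -1)%Z.
Hypothesis be_sign : 0 < IZR t * be.
Hypothesis al_sign : 0 < IZR t * alt (r + 1) * al.

Definition u_al := vscale al u0.
Definition w_be := vscale be w0.

Let t_sq : IZR t * IZR t = 1.
Proof. destruct t_unit as [-> | ->]; simpl; lra. Qed.

Let al_nz : al <> 0.
Proof. intro h. rewrite h in al_sign. lra. Qed.

Let be_nz : be <> 0.
Proof. intro h. rewrite h in be_sign. lra. Qed.

Let det_u0_w0_nz : det u0 w0 <> 0.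
Proof. pose proof det_u0_w0_pos. lra. Qed.

Lemma det_u_al_w_be : det u_al w_be = al * be * det u0 w0.
Proof. unfold u_al, w_be, det, vscale; simpl. ring. Qed.

Lemma u_al_w_be_indep : det u_al w_be <> 0.
Proof. rewrite det_u_al_w_be. repeat apply Rmult_integral_contrapositive_currified; auto. Qed.

Lemma ucoord_vert k : ucoord u_al w_be (vert t r k) = IZR t * det (cont (2 * k + r)) w0 / (al * det u0 w0).
Proof. unfold ucoord. rewrite det_u_al_w_be. unfold vert, w_be, det, vscale; simpl. field. auto. Qed.

Lemma wcoord_vert k : wcoord u_al w_be (vert t r k) = - IZR t * det (cont (2 * k + r)) u0 / (be * det u0 w0).
Proof. unfold wcoord. rewrite det_u_al_w_be. unfold vert, u_al, det, vscale; simpl. field. auto. Qed.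

Lemma ucoord_vert_pos k : 0 < ucoord u_al w_be (vert t r k).
Proof.
  rewrite ucoord_vert. pose proof det_u0_w0_pos. pose proof (det_cont_w0_alt (2 * k + r)) as HW.
  rewrite alt_vert_index in HW.
  replace (IZR t * det (cont (2 * k + r)) w0 / (al * det u0 w0))
    with ((IZR t * alt (r + 1) * al) * (det (cont (2 * k + r)) w0 * alt (r + 1)) / (al * al * det u0 w0)).
  2:{ replace ((IZR t * alt (r + 1) * al) * (det (cont (2 * k + r)) w0 * alt (r + 1)))
        with (IZR t * al * det (cont (2 * k + r)) w0 * (alt (r + 1) * alt (r + 1))) by ring.
      rewrite alt_sq. field. auto. }
  apply Rdiv_lt_0_compat; [apply Rmult_lt_0_compat; auto|].
  apply Rmult_lt_0_compat; auto. pose proof (Rsqr_pos_lt al al_nz). unfold Rsqr in *. lra.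
Qed.

Lemma wcoord_vert_pos k : 0 < wcoord u_al w_be (vert t r k).
Proof.
  rewrite wcoord_vert. pose proof det_u0_w0_pos. pose proof (det_cont_u0_neg (2 * k + r)).
  replace (- IZR t * det (cont (2 * k + r)) u0 / (be * det u0 w0))
    with ((IZR t * be) * (- det (cont (2 * k + r)) u0) / (be * be * det u0 w0)) by (field; auto).
  apply Rdiv_lt_0_compat; [apply Rmult_lt_0_compat; lra|].
  apply Rmult_lt_0_compat; auto. pose proof (Rsqr_pos_lt be be_nz). unfold Rsqr in *. lra.
Qed.

Lemma vert_turn k : 0 < det (vert t r k) (vert t r (k + 1)) * det u_al w_be.
Proof.
  rewrite det_vert_succ, t_sq, det_u_al_w_be, alt_vert_index.
  pose proof (coefR_ge1 (2 * k + r + 2)). pose proof det_u0_w0_pos.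
  replace (1 * coefR (2 * k + r + 2) * alt (r + 1) * (al * be * det u0 w0))
    with (coefR (2 * k + r + 2) * det u0 w0 * ((IZR t * alt (r + 1) * al) * (IZR t * be)))
    by (transitivity ((IZR t * IZR t) * coefR (2 * k + r + 2) * alt (r + 1) * (al * be * det u0 w0));
        [ring|rewrite t_sq; ring]).
  apply Rmult_lt_0_compat; apply Rmult_lt_0_compat; lra.
Qed.

Lemma vert_break k : det (vsub (vert t r (k - 1)) (vert t r k)) (vsub (vert t r (k + 1)) (vert t r k)) <> 0.
Proof.
  rewrite det_vert_turn, t_sq.
  pose proof (coefR_ge1 (2 * k + r)); pose proof (coefR_ge1 (2 * k + r + 1));
    pose proof (coefR_ge1 (2 * k + r + 2)).
  pose proof (alt_cases (2 * k + r)).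
  intro h. repeat (apply Rmult_integral in h; destruct h as [h|h]); lra.
Qed.

Lemma vert_int k : integer_point (vert t r k).
Proof.
  exists (t * fst (contZ (2 * k + r)))%Z, (t * snd (contZ (2 * k + r)))%Z.
  unfold vert, cont, vscale. simpl. rewrite !mult_IZR. reflexivity.
Qed.

Lemma vert_form_left k : edge_form (vert_form t r) k (vert t r k) = 1.
Proof.
  rewrite vert_form_eq. unfold vert.
  replace (det (vscale (IZR t) (cont (2 * k + r))) (cont (2 * k + r + 1)))
    with (IZR t * det (cont (2 * k + r)) (cont (2 * k + r + 1))) by (unfold det, vscale; simpl; ring).
  rewrite det_cont_succ.
  transitivity ((IZR t * IZR t) * (alt (2 * k + r + 1) * alt (2 * k + r + 1))); [ring|].
  rewrite t_sq, alt_sq. ring.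
Qed.

Lemma vert_form_right k : edge_form (vert_form t r) k (vert t r (k + 1)) = 1.
Proof.
  rewrite vert_form_eq. unfold vert. replace (2 * (k + 1) + r)%Z with (2 * k + r + 1 + 1)%Z by ring.
  rewrite (cont_rec (2 * k + r + 1)), Z.add_simpl_r.
  set (j := (2 * k + r + 1)%Z).
  replace (det (vscale (IZR t) (fst (cont (2 * k + r)) + coefR (j + 1) * fst (cont j),
                 snd (cont (2 * k + r)) + coefR (j + 1) * snd (cont j))) (cont j))
    with (IZR t * det (cont (2 * k + r)) (cont (2 * k + r + 1))) by (unfold j, det, vscale; simpl; ring).
  rewrite det_cont_succ. fold j.
  transitivity ((IZR t * IZR t) * (alt j * alt j)); [ring|]. rewrite t_sq, alt_sq. ring.
Qed.

Lemma vert_form_u k : edge_form (vert_form t r) k u_al =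
  (IZR t * alt (r + 1) * al) * (- det (cont (2 * k + r + 1)) u0).
Proof. rewrite vert_form_eq, alt_vert_index. unfold u_al, det, vscale; simpl. ring. Qed.

Lemma vert_form_w k : edge_form (vert_form t r) k w_be =
  (IZR t * be) * (det (cont (2 * k + r + 1)) w0 * alt (2 * k + r + 1 + 1)).
Proof. rewrite vert_form_eq, (alt_succ (2 * k + r + 1)). unfold w_be, det, vscale; cbn [fst snd]. ring. Qed.

Lemma vert_form_u_pos k : 0 < edge_form (vert_form t r) k u_al.
Proof. rewrite vert_form_u. pose proof (det_cont_u0_neg (2 * k + r + 1)). apply Rmult_lt_0_compat; lra. Qed.

Lemma vert_form_w_pos k : 0 < edge_form (vert_form t r) k w_be.
Proof. rewrite vert_form_w. pose proof (det_cont_w0_alt (2 * k + r + 1)). apply Rmult_lt_0_compat; lra. Qed.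

Lemma vert_form_u_shift k :
  edge_form (vert_form t r) (k + period) u_al = mu * mu * edge_form (vert_form t r) k u_al.
Proof.
  rewrite !vert_form_u. replace (2 * (k + period) + r + 1)%Z with (2 * k + r + 1 + period + period)%Z by ring.
  rewrite !det_cont_u0_shift. ring.
Qed.

Lemma vert_form_w_shift k :
  edge_form (vert_form t r) (k + period) w_be = lam * lam * edge_form (vert_form t r) k w_be.
Proof.
  rewrite !vert_form_w. replace (2 * (k + period) + r + 1)%Z with (2 * k + r + 1 + period + period)%Z by ring.
  rewrite !det_cont_w0_shift.
  replace (2 * k + r + 1 + period + period + 1)%Z with (2 * k + r + 1 + 1 + 2 * period)%Z by ring.
  rewrite alt_add, alt_double. ring.
Qed.

Lemma slope_vert_shift k : slope u_al w_be (vert t r (k + period)) =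
  (mu * mu / (lam * lam)) * slope u_al w_be (vert t r k).
Proof.
  pose proof (ucoord_vert_pos k) as H. pose proof lam_nz. unfold slope. rewrite !ucoord_vert, !wcoord_vert in *.
  replace (2 * (k + period) + r)%Z with (2 * k + r + period + period)%Z by ring.
  rewrite !det_cont_u0_shift, !det_cont_w0_shift.
  assert (det (cont (2 * k + r)) w0 <> 0) by (intro h; rewrite h in H; unfold Rdiv in H; lra).
  assert (IZR t <> 0) by (intro h; rewrite h in t_sq; lra).
  field. repeat split; auto.
Qed.

Lemma vert_form_u_small e : 0 < e -> exists k, edge_form (vert_form t r) k u_al < e.
Proof.
  apply (shift_geometric_small_rev _ period (mu * mu)); [pose proof mu_gt1; nra|].
  apply vert_form_u_shift.
Qed.

Lemma vert_form_w_small e : 0 < e -> exists k, edge_form (vert_form t r) k w_be < e.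
Proof.
  apply (shift_geometric_small _ period (lam * lam)); [|apply vert_form_w_shift].
  pose proof Rabs_lam_lt1 as H. apply Rabs_def2 in H. pose proof lam_nz. split; nra.
Qed.

Lemma slope_growth_gt1 : 1 < mu * mu / (lam * lam).
Proof.
  pose proof mu_gt1. pose proof Rabs_lam_lt1 as Hl. apply Rabs_def2 in Hl. pose proof lam_nz.
  assert (0 < lam * lam) by nra.
  apply Rmult_lt_reg_r with (lam * lam); auto. unfold Rdiv. rewrite Rmult_assoc, Rinv_l by lra. nra.
Qed.

Lemma slope_vert_pos k : 0 < slope u_al w_be (vert t r k).
Proof. apply Rdiv_lt_0_compat; [apply wcoord_vert_pos|apply ucoord_vert_pos]. Qed.

Lemma slope_vert_to_zero e : 0 < e -> exists k, slope u_al w_be (vert t r k) < e.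
Proof. apply (shift_geometric_small_rev _ period _ slope_growth_gt1), slope_vert_shift. Qed.

Lemma slope_vert_unbounded R0 : exists k, R0 < slope u_al w_be (vert t r k).
Proof.
  set (q := mu * mu / (lam * lam)). pose proof slope_growth_gt1 as Hq. fold q in Hq.
  destruct (shift_geometric_small (fun k => / slope u_al w_be (vert t r k)) period (/ q))
    with (e := / (Rabs R0 + 1)) as [k Hk].
  - split; [left; apply Rinv_0_lt_compat; lra|]. rewrite <- Rinv_1. apply Rinv_lt_contravar; lra.
  - intro k. rewrite slope_vert_shift. fold q. pose proof (slope_vert_pos k).
    field. split; lra.
  - pose proof (Rabs_pos R0). apply Rinv_0_lt_compat. lra.
  - exists k. pose proof (slope_vert_pos k). pose proof (Rle_abs R0). pose proof (Rabs_pos R0).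
    destruct (Rlt_or_le (Rabs R0 + 1) (slope u_al w_be (vert t r k))) as [h|h]; [lra|].
    pose proof (Rinv_le_contravar _ _ (slope_vert_pos k) h). lra.
Qed.

Theorem vert_sail_vertices : sail_vertices u_al w_be (vert t r).
Proof.
  apply (sail_vertices_criterion _ _ _ (vert_form t r) u_al_w_be_indep vert_int ucoord_vert_pos
           wcoord_vert_pos vert_turn vert_form_left vert_form_right vert_form_u_pos vert_form_w_pos
           vert_form_u_small vert_form_w_small slope_vert_unbounded slope_vert_to_zero vert_break).
Qed.

Theorem sail_vertices_vert_shift A : sail_vertices u_al w_be A -> exists c, forall k, A k = vert t r (k + c).
Proof.
  apply (sail_vertices_shift _ _ _ (vert_form t r) u_al_w_be_indep vert_int ucoord_vert_pos
           wcoord_vert_pos vert_turn vert_form_left vert_form_right vert_form_u_pos vert_form_w_pos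
           vert_form_u_small vert_form_w_small slope_vert_unbounded slope_vert_to_zero vert_break).
Qed.

Lemma vert_inj k l : vert t r k = vert t r l -> k = l.
Proof.
  intro E. apply (incr_inj (fun k => slope u_al w_be (vert t r k))).
  - apply (slope_V_incr _ _ _ u_al_w_be_indep ucoord_vert_pos vert_turn).
  - simpl. rewrite E. reflexivity.
Qed.

End SignedVertices.

Lemma assoc_angle_eigvecs u w : assoc_angle (Mprod a) u w ->
  exists al be, al <> 0 /\ be <> 0 /\ u = vscale al u0 /\ w = vscale be w0.
Proof.
  intros [HD [x [y [[Hx Hy] [Hu Hw]]]]].
  assert (Hu0 : fst u <> 0 \/ snd u <> 0)
    by (destruct (Req_dec (fst u) 0) as [h|h]; auto; right; intro h'; apply HD; unfold det; rewrite h, h'; ring).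
  assert (Hw0 : fst w <> 0 \/ snd w <> 0)
    by (destruct (Req_dec (fst w) 0) as [h|h]; auto; right; intro h'; apply HD; unfold det; rewrite h, h'; ring).
  assert (x = lam) as ->.
  { destruct (eigval_cases u x Hu0 Hu) as [h|h]; auto. pose proof mu_gt1.
    rewrite h, Rabs_pos_eq in Hx; lra. }
  assert (y = mu) as ->.
  { destruct (eigval_cases w y Hw0 Hw) as [h|h]; auto. pose proof Rabs_lam_lt1. subst. lra. }
  pose proof (eigvec_form u lam Hu) as Eu. pose proof (eigvec_form w mu Hw) as Ew.
  exists (fst u / r12), (fst w / r12). repeat split; auto.
  - intro h. rewrite h in Eu. rewrite Eu in Hu0. unfold vscale in Hu0; simpl in Hu0. lra.
  - intro h. rewrite h in Ew. rewrite Ew in Hw0. unfold vscale in Hw0; simpl in Hw0. lra.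
Qed.

Lemma sign_choice al be : al <> 0 -> be <> 0 ->
  exists t r, (t = 1 \/ t = -1)%Z /\ 0 < IZR t * be /\ 0 < IZR t * alt (r + 1) * al.
Proof.
  intros Ha Hb.
  destruct (Rtotal_order be 0) as [hb|[hb|hb]]; [|contradiction|];
    destruct (Rtotal_order al 0) as [ha|[ha|ha]]; try contradiction.
  - exists (-1)%Z, 1%Z. unfold alt, altZ; simpl. repeat split; auto; lra.
  - exists (-1)%Z, 0%Z. unfold alt, altZ; simpl. repeat split; auto; lra.
  - exists 1%Z, 0%Z. unfold alt, altZ; simpl. repeat split; auto; lra.
  - exists 1%Z, 1%Z. unfold alt, altZ; simpl. repeat split; auto; lra.
Qed.

Theorem sail_of_M_exists :
  exists u w A, assoc_angle (Mprod a) u w /\ sail_vertices u w A /\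
    exists s, (1 <= s)%Z /\ forall k, act (mmul (Mprod a) (Mprod a)) (A k) = A (k + s)%Z.
Proof.
  assert (Ht : (1 = 1 \/ 1 = -1)%Z) by auto.
  assert (Hb : 0 < IZR 1 * 1) by (simpl; lra).
  assert (Ha : 0 < IZR 1 * alt (1 + 1) * 1) by (unfold alt, altZ; simpl; lra).
  exists (u_al 1), (w_be 1), (vert 1 1). split; [|split].
  - split; [apply (u_al_w_be_indep 1 1 1 1); auto|].
    pose proof mu_gt1. exists lam, mu. split; [split; [apply Rabs_lam_lt1|rewrite Rabs_pos_eq; lra]|].
    unfold u_al, w_be. rewrite !act_M_scale, act_M_u0, act_M_w0. unfold vscale; simpl.
    split; f_equal; ring.
  - apply (vert_sail_vertices 1 1 1 1); auto.
  - exists period. split; [pose proof period_pos; lia|]. apply act_M2_vert.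
Qed.

Lemma lls_ext (A B : Z -> pt) : (forall k, A k = B k) -> forall m, lls A m = lls B m.
Proof. intros H m. unfold lls. rewrite !H. reflexivity. Qed.

Theorem sail_of_M_lls_period u w A s :
  assoc_angle (Mprod a) u w -> sail_vertices u w A ->
  (forall k, act (mmul (Mprod a) (Mprod a)) (A k) = A (k + s)%Z) ->
  s = Z.of_nat (length a) /\
  exists j : Z, forall i : nat, (i < length a)%nat -> lls A (j + Z.of_nat i)%Z = IZR (nth i a 0%Z).
Proof.
  intros Hang HA Hs.
  destruct (assoc_angle_eigvecs u w Hang) as [al [be [Hal [Hbe [-> ->]]]]].
  destruct (sign_choice al be Hal Hbe) as [t [r [Ht [Hb Ha]]]].
  destruct (sail_vertices_vert_shift al be t r) with (A := A) as [c Hc]; auto.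
  split.
  - specialize (Hs 0%Z). rewrite !Hc, act_M2_vert in Hs.
    apply (vert_inj al be t r) in Hs; auto. unfold period in Hs. lia.
  - exists (- (r + 2 * c) - 1)%Z. intros i Hi.
    rewrite (lls_ext A (vert t (r + 2 * c))) by (intro k; rewrite Hc, vert_shift; reflexivity).
    rewrite lls_vert by auto.
    replace (- (r + 2 * c) - 1 + Z.of_nat i + (r + 2 * c) + 2)%Z with (Z.of_nat i + 1)%Z by ring.
    unfold coefR. rewrite coef_nth by exact Hi. reflexivity.
Qed.

End PeriodicCoefficients.

Theorem theorem2 (a : list Z) :
  (0 < length a)%nat ->
  Forall (fun x => (0 < x)%Z) a ->
  (* the LLS period of M is well defined: there is an associated sail, and M^2
     shifts its vertices by some n' >= 1 positions *)
  (exists u w A, assoc_angle (Mprod a) u w /\ sail_vertices u w A /\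
     exists s, (1 <= s)%Z /\
       forall k, act (mmul (Mprod a) (Mprod a)) (A k) = A (k + s)%Z) /\
  (* and for every associated sail, with M^2 shifting vertices by n' positions,
     n' = n and (a_1, ..., a_n) is a block of n' consecutive LLS entries *)
  (forall u w A s,
     assoc_angle (Mprod a) u w -> sail_vertices u w A ->
     (forall k, act (mmul (Mprod a) (Mprod a)) (A k) = A (k + s)%Z) ->
     s = Z.of_nat (length a) /\
     exists j : Z, forall i : nat, (i < length a)%nat ->
       lls A (j + Z.of_nat i)%Z = IZR (nth i a 0%Z)).
Proof.
  intros Hn Hpos. split.
  - apply sail_of_M_exists; assumption.
  - intros u w A s. apply sail_of_M_lls_period; assumption.
Qed.
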